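(* Let $c=\min_{x\in\partial D}\phi(x;p,p')$ (so $c>|p-p'|$), fix $0<s<\eta'$, let $q\in\Lambda_{\partial D}(p,p')$ and $A'=\frac{q-p'}{|q-p'|}$. Then $\Lambda_{\partial D}(p,p'+sA')=\{q\}$. Moreover, if in addition $s<\frac12(c-|p-p'|)$, then $S_q\big(E_{c-s}(p,p'+sA')\big)-S_q(\partial D)$ is positive definite on the common tangent plane $T_q(\partial D)=T_q(E_{c-s}(p,p'+sA'))=T_q(E_c(p,p'))$.
   Context: Let $D\subset\mathbb R^3$ be a nonempty bounded open set with $C^2$ boundary; $\nu_q$ is the unit outward normal. $p,p'\in\mathbb R^3\setminus\overline D$ with $[p,p']\cap\overline D=\emptyset$; $B'$ is the open ball with center $p'$ and radius $\eta'$, $\overline{B'}\cap\overline D=\emptyset$. $\phi(x;y,y')=|y-x|+|x-y'|$; $E_c(p,p')=\{x:\phi(x;p,p')=c\}$; $\Lambda_{\partial D}(p,p')=\{q\in\partial D:\phi(q;p,p')=\min_{x\in\partial D}\phi(x;p,p')\}$. Shape operators $S_q(\cdot)$ are taken at $q$ with respect to $\nu_q$ ($S_q(v)=-D_vN$). *)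

From Stdlib Require Import Reals Lra.
Open Scope R_scope.

Definition R3 : Type := (R * R * R)%type.

Definition vzero : R3 := (0, 0, 0).
Definition vadd (u v : R3) : R3 :=
  let '(u1, u2, u3) := u in let '(v1, v2, v3) := v in (u1 + v1, u2 + v2, u3 + v3).
Definition vscal (a : R) (u : R3) : R3 :=
  let '(u1, u2, u3) := u in (a * u1, a * u2, a * u3).
Definition vsub (u v : R3) : R3 := vadd u (vscal (-1) v).
Definition dot (u v : R3) : R :=
  let '(u1, u2, u3) := u in let '(v1, v2, v3) := v in u1 * v1 + u2 * v2 + u3 * v3.
Definition vnorm (u : R3) : R := sqrt (dot u u).

Definition ball (c : R3) (r : R) (x : R3) : Prop := vnorm (vsub x c) < r.
Definition closed_ball (c : R3) (r : R) (x : R3) : Prop := vnorm (vsub x c) <= r.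
Definition is_open (U : R3 -> Prop) : Prop :=
  forall x, U x -> exists r, 0 < r /\ forall y, ball x r y -> U y.
Definition is_bounded (U : R3 -> Prop) : Prop :=
  exists M, forall x, U x -> vnorm x <= M.
Definition closure (U : R3 -> Prop) (x : R3) : Prop :=
  forall r, 0 < r -> exists y, U y /\ ball x r y.
Definition boundary (U : R3 -> Prop) (x : R3) : Prop :=
  closure U x /\ closure (fun y => ~ U y) x.

Definition segment (a b : R3) (x : R3) : Prop :=
  exists t, 0 <= t <= 1 /\ x = vadd a (vscal t (vsub b a)).

Definition is_linear (L : R3 -> R3) : Prop :=
  (forall u v, L (vadd u v) = vadd (L u) (L v)) /\
  (forall a u, L (vscal a u) = vscal a (L u)).

Definition has_grad (f : R3 -> R) (x g : R3) : Prop :=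
  forall eps, 0 < eps -> exists del, 0 < del /\
    forall h, vnorm h < del ->
      Rabs (f (vadd x h) - f x - dot g h) <= eps * vnorm h.

Definition has_deriv (F : R3 -> R3) (x : R3) (L : R3 -> R3) : Prop :=
  is_linear L /\
  forall eps, 0 < eps -> exists del, 0 < del /\
    forall h, vnorm h < del ->
      vnorm (vsub (vsub (F (vadd x h)) (F x)) (L h)) <= eps * vnorm h.

Definition cont_on (U : R3 -> Prop) (F : R3 -> R3) : Prop :=
  forall x, U x -> forall eps, 0 < eps -> exists del, 0 < del /\
    forall y, U y -> vnorm (vsub y x) < del -> vnorm (vsub (F y) (F x)) < eps.

Definition C2_on (U : R3 -> Prop) (F : R3 -> R) (G : R3 -> R3) : Prop :=
  (forall x, U x -> has_grad F x (G x)) /\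
  exists DG : R3 -> R3 -> R3,
    (forall x, U x -> has_deriv G x (DG x)) /\
    (forall v, cont_on U (fun x => DG x v)).

Definition local_def_fn (D : R3 -> Prop) (q : R3) (r : R) (F : R3 -> R) (G : R3 -> R3)
  : Prop :=
  0 < r /\ C2_on (ball q r) F G /\
  (forall x, ball q r x -> G x <> vzero) /\
  (forall x, ball q r x -> (D x <-> F x < 0)).

Definition C2_boundary (D : R3 -> Prop) : Prop :=
  forall q, boundary D q -> exists r F G, local_def_fn D q r F G.

Definition outward_normal (D : R3 -> Prop) (q n : R3) : Prop :=
  boundary D q /\
  exists r F G, local_def_fn D q r F G /\ n = vscal (/ vnorm (G q)) (G q).

Definition local_level (M : R3 -> Prop) (q : R3) (r : R) (F : R3 -> R) (G : R3 -> R3)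
  : Prop :=
  0 < r /\ C2_on (ball q r) F G /\
  (forall x, ball q r x -> G x <> vzero) /\
  (forall x, ball q r x -> (M x <-> F x = 0)).

Definition tangent_plane (M : R3 -> Prop) (q v : R3) : Prop :=
  M q /\ exists r F G, local_level M q r F G /\ dot (G q) v = 0.

(* S is (a linear map whose restriction to T_q(M) is) the shape operator of M at q
   with respect to the unit normal n: S(v) = - D_v N, where N is the unit normal
   field of M near q with N(q) = n. *)
Definition shape_op (M : R3 -> Prop) (q n : R3) (S : R3 -> R3) : Prop :=
  M q /\ exists r F G, local_level M q r F G /\
    exists sg, (sg = 1 \/ sg = -1) /\
      let N := fun x => vscal (sg / vnorm (G x)) (G x) in
      N q = n /\ has_deriv N q (fun v => vscal (-1) (S v)).

Definition phi (x y y' : R3) : R := vnorm (vsub y x) + vnorm (vsub x y').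

Definition ellipsoid (c : R) (y y' : R3) (x : R3) : Prop := phi x y y' = c.

Definition Lambda (D : R3 -> Prop) (y y' : R3) (q : R3) : Prop :=
  boundary D q /\ forall x, boundary D x -> phi q y y' <= phi x y y'.

From Stdlib Require Import Reals.
From Stdlib Require Import Lra Psatz.
Open Scope R_scope.

Ltac destruct_vectors := repeat match goal with
  | u : R3 |- _ => let a := fresh "a" in let b := fresh "b" in let c := fresh "c" in
                   destruct u as [[a b] c]
  end.
Ltac unfold_vectors := unfold vsub, vadd, vscal, dot, vzero in *.

Lemma dot_comm u v : dot u v = dot v u.
Proof. destruct_vectors; unfold_vectors; ring. Qed.
Lemma dot_addl u v w : dot (vadd u v) w = dot u w + dot v w.
Proof. destruct_vectors; unfold_vectors; ring. Qed.
Lemma dot_addr u v w : dot w (vadd u v) = dot w u + dot w v.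
Proof. destruct_vectors; unfold_vectors; ring. Qed.
Lemma dot_subl u v w : dot (vsub u v) w = dot u w - dot v w.
Proof. destruct_vectors; unfold_vectors; ring. Qed.
Lemma dot_subr u v w : dot w (vsub u v) = dot w u - dot w v.
Proof. destruct_vectors; unfold_vectors; ring. Qed.
Lemma dot_scall a u w : dot (vscal a u) w = a * dot u w.
Proof. destruct_vectors; unfold_vectors; ring. Qed.
Lemma dot_scalr a u w : dot w (vscal a u) = a * dot w u.
Proof. destruct_vectors; unfold_vectors; ring. Qed.
Lemma dot_ge0 u : 0 <= dot u u.
Proof. destruct_vectors; unfold_vectors; nra. Qed.
Lemma dot_eq0 u : dot u u = 0 -> u = vzero.
Proof.
  destruct_vectors; unfold_vectors; intros H.
  assert (a = 0) by nra. assert (b = 0) by nra. assert (c = 0) by nra.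
  subst; reflexivity.
Qed.
Lemma dot_zero_l u : dot vzero u = 0.
Proof. destruct_vectors; unfold_vectors; ring. Qed.
Lemma dot_vadd_self u v : dot (vadd u v) (vadd u v) = dot u u + 2 * dot u v + dot v v.
Proof. destruct_vectors; unfold_vectors; ring. Qed.

Lemma vnorm_ge0 u : 0 <= vnorm u.
Proof. apply sqrt_pos. Qed.
Lemma vnorm_sq u : vnorm u * vnorm u = dot u u.
Proof. apply sqrt_sqrt, dot_ge0. Qed.
Lemma vnorm_zero : vnorm vzero = 0.
Proof. unfold vnorm. rewrite dot_zero_l. apply sqrt_0. Qed.
Lemma vnorm_eq0 u : vnorm u = 0 -> u = vzero.
Proof. intros H. apply dot_eq0. rewrite <- vnorm_sq, H. ring. Qed.
Lemma vnorm_pos u : u <> vzero -> 0 < vnorm u.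
Proof.
  intros H. destruct (vnorm_ge0 u) as [H1|H1]; auto.
  symmetry in H1. apply vnorm_eq0 in H1. tauto.
Qed.

Lemma abs_le_of_sq x y : 0 <= y -> x * x <= y * y -> Rabs x <= y.
Proof. intros Hy H. unfold Rabs; destruct (Rcase_abs x); nra. Qed.
Lemma le_of_sq x y : 0 <= y -> x * x <= y * y -> x <= y.
Proof. intros Hy H. nra. Qed.
Lemma abs_bounds x y : Rabs x <= y -> - y <= x /\ x <= y.
Proof. unfold Rabs; destruct Rcase_abs; intros; lra. Qed.
Lemma Rdiv_le_0_compat' a b : 0 <= a -> 0 < b -> 0 <= a / b.
Proof. intros. unfold Rdiv. apply Rmult_le_pos; auto. left; apply Rinv_0_lt_compat; auto. Qed.

(* Lagrange's identity in R^3 gives the Cauchy-Schwarz inequality. *)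
Lemma cauchy_schwarz_sq u v : dot u v * dot u v <= dot u u * dot v v.
Proof.
  destruct u as [[x1 x2] x3], v as [[y1 y2] y3]; unfold_vectors.
  assert (H: (x1*x1+x2*x2+x3*x3)*(y1*y1+y2*y2+y3*y3) - (x1*y1+x2*y2+x3*y3)*(x1*y1+x2*y2+x3*y3)
   = (x1*y2-x2*y1)*(x1*y2-x2*y1) + (x1*y3-x3*y1)*(x1*y3-x3*y1) + (x2*y3-x3*y2)*(x2*y3-x3*y2)) by ring.
  pose proof (Rle_0_sqr (x1*y2-x2*y1)); pose proof (Rle_0_sqr (x1*y3-x3*y1));
  pose proof (Rle_0_sqr (x2*y3-x3*y2)); unfold Rsqr in *; lra.
Qed.
Lemma cauchy_schwarz u v : Rabs (dot u v) <= vnorm u * vnorm v.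
Proof.
  apply abs_le_of_sq. apply Rmult_le_pos; apply vnorm_ge0.
  replace (vnorm u * vnorm v * (vnorm u * vnorm v))
    with ((vnorm u * vnorm u) * (vnorm v * vnorm v)) by ring.
  rewrite !vnorm_sq. apply cauchy_schwarz_sq.
Qed.
Lemma cauchy_schwarz' u v : dot u v <= vnorm u * vnorm v.
Proof. eapply Rle_trans; [apply Rle_abs| apply cauchy_schwarz]. Qed.

Lemma vnorm_triangle u v : vnorm (vadd u v) <= vnorm u + vnorm v.
Proof.
  apply le_of_sq. pose proof (vnorm_ge0 u); pose proof (vnorm_ge0 v); lra.
  rewrite vnorm_sq, dot_vadd_self.
  pose proof (cauchy_schwarz' u v). rewrite <- (vnorm_sq u), <- (vnorm_sq v). nra.
Qed.

Lemma vnorm_scal a u : vnorm (vscal a u) = Rabs a * vnorm u.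
Proof.
  unfold vnorm. rewrite dot_scall, dot_scalr.
  replace (a * (a * dot u u)) with ((a*a) * dot u u) by ring.
  rewrite sqrt_mult; [| nra | apply dot_ge0].
  fold (Rsqr a). rewrite sqrt_Rsqr_abs. reflexivity.
Qed.

(* [vec_ring] proves an equation between vector expressions componentwise;
   opaque subterms of type R3 are first generalized. *)
Ltac generalize_vectors := repeat match goal with |- context [?t] =>
   match type of t with R3 => lazymatch t with
   | vadd _ _ => fail | vsub _ _ => fail | vscal _ _ => fail | (_,_,_) => fail | vzero => fail
   | _ => tryif is_var t then fail else (generalize t; intro) end end end.
Ltac vec_split := generalize_vectors; destruct_vectors; unfold_vectors;
  cbn -[Rplus Rmult Ropp Rinv Rminus Rdiv];
  match goal with |- (?a,?b,?c) = (?d,?e,?f) =>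
    apply (f_equal2 pair); [apply (f_equal2 pair)|] end.
Ltac vec_ring := vec_split; unfold Rdiv; ring.

Lemma vsub_add a b : vadd (vsub a b) b = a.
Proof. vec_ring. Qed.
Lemma vadd_sub_l a b : vsub (vadd a b) a = b.
Proof. vec_ring. Qed.
Lemma vscal_inv s u : s <> 0 -> vscal (/ s) (vscal s u) = u.
Proof. intros. vec_split; field; auto. Qed.
Lemma vscal_0 u : vscal 0 u = vzero.
Proof. vec_ring. Qed.
Lemma vscal_assoc a b u : vscal a (vscal b u) = vscal (a * b) u.
Proof. vec_ring. Qed.

Lemma vnorm_opp u : vnorm (vscal (-1) u) = vnorm u.
Proof. rewrite vnorm_scal, Rabs_left by lra. ring. Qed.
Lemma vnorm_sub_sym a b : vnorm (vsub a b) = vnorm (vsub b a).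
Proof. replace (vsub a b) with (vscal (-1) (vsub b a)) by vec_ring. apply vnorm_opp. Qed.
Lemma vnorm_sub_tri a b c : vnorm (vsub a c) <= vnorm (vsub a b) + vnorm (vsub b c).
Proof. replace (vsub a c) with (vadd (vsub a b) (vsub b c)) by vec_ring. apply vnorm_triangle. Qed.
Lemma vnorm_rev_tri u v : Rabs (vnorm u - vnorm v) <= vnorm (vsub u v).
Proof.
  pose proof (vnorm_sub_tri u v vzero). pose proof (vnorm_sub_tri v u vzero).
  replace (vsub u vzero) with u in * by vec_ring. replace (vsub v vzero) with v in * by vec_ring.
  rewrite (vnorm_sub_sym v u) in *. unfold Rabs; destruct Rcase_abs; lra.
Qed.
Lemma vnorm_sub_le u v : vnorm (vsub u v) <= vnorm u + vnorm v.
Proof. unfold vsub. eapply Rle_trans. apply vnorm_triangle. rewrite vnorm_opp. lra. Qed.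

Lemma lin_zero L : is_linear L -> L vzero = vzero.
Proof.
  intros [Ha Hs]. pose proof (Hs 0 vzero) as H.
  replace (vscal 0 vzero) with vzero in H by vec_ring. rewrite H.
  destruct (L vzero) as [[x y] z]. vec_ring.
Qed.
Lemma lin_sub L u v : is_linear L -> L (vsub u v) = vsub (L u) (L v).
Proof. intros [Ha Hs]. unfold vsub at 1. rewrite Ha, Hs. reflexivity. Qed.
Lemma lin_add L u v : is_linear L -> L (vadd u v) = vadd (L u) (L v).
Proof. intros [Ha Hs]. apply Ha. Qed.
Lemma lin_scal L a u : is_linear L -> L (vscal a u) = vscal a (L u).
Proof. intros [Ha Hs]. apply Hs. Qed.

Lemma coord_le_norm (x y z : R) :
  Rabs x <= vnorm (x,y,z) /\ Rabs y <= vnorm (x,y,z) /\ Rabs z <= vnorm (x,y,z).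
Proof.
  pose proof (vnorm_sq (x,y,z)) as H. pose proof (vnorm_ge0 (x,y,z)).
  unfold dot in H. repeat split; apply abs_le_of_sq; auto; nra.
Qed.

(* Every linear map of R^3 is bounded (by the norms of the basis images). *)
Lemma linear_bounded L : is_linear L -> exists K, 0 <= K /\ forall h, vnorm (L h) <= K * vnorm h.
Proof.
  intros HL. set (e1 := (1,0,0) : R3). set (e2 := (0,1,0) : R3). set (e3 := (0,0,1) : R3).
  pose proof (vnorm_ge0 (L e1)); pose proof (vnorm_ge0 (L e2)); pose proof (vnorm_ge0 (L e3)).
  exists (vnorm (L e1) + vnorm (L e2) + vnorm (L e3)). split; [lra|].
  intros [[x y] z].
  assert (Hh: (x,y,z) = vadd (vadd (vscal x e1) (vscal y e2)) (vscal z e3))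
    by (unfold e1, e2, e3; vec_ring).
  rewrite Hh at 1. rewrite !lin_add, !lin_scal by auto.
  destruct (coord_le_norm x y z) as [Hx [Hy Hz]].
  eapply Rle_trans. apply vnorm_triangle.
  eapply Rle_trans. apply Rplus_le_compat_r. apply vnorm_triangle.
  rewrite (lin_scal L z e3), !vnorm_scal by auto. nra.
Qed.

(* The normalization map y |-> y/|y| and its derivative
   d |-> (d - <u,d> u)/|y|  (u = y/|y|), the tangential projection scaled
   by 1/|y|. *)
Definition normalize (y : R3) : R3 := vscal (/ vnorm y) y.
Definition dnormalize (y d : R3) : R3 :=
  vsub (vscal (/ vnorm y) d) (vscal (dot y d / (vnorm y ^ 3)) y).

(* Scalar core of the expansion |y + h| = |y| + <y,h>/|y| + O(|h|^2):
   a = |y + h|, b = |y|, s = <y,h>, k = |h|. *)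
Lemma sqrt_expansion_bound a b s k : 0 <= a -> 0 < b -> 0 <= k ->
  a * a = b * b + 2 * s + k * k -> Rabs s <= b * k ->
  Rabs (a - b - s / b) <= 2 * k * k / b.
Proof.
  intros Ha Hb Hk Heq Hs. apply abs_bounds in Hs.
  assert (Hab: Rabs (a - b) <= k).
  { assert (a <= b + k) by (apply le_of_sq; nra).
    assert (b - k <= a). { destruct (Rle_dec (b - k) 0). lra. apply le_of_sq; nra. }
    unfold Rabs; destruct Rcase_abs; lra. }
  assert (Hid: (a - b - s / b) * (b * (a + b)) = s * (b - a) + b * (k * k)).
  { field_simplify; [|lra]. nra. }
  assert (Hpos: 0 < b * (a + b)) by nra.
  apply (Rmult_le_reg_r (b * (a + b))); auto.
  replace (2 * k * k / b * (b * (a + b))) with (2 * k * k * (a + b)) by (field; lra).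
  rewrite <- (Rabs_pos_eq (b * (a+b))) by lra. rewrite <- Rabs_mult, Hid.
  apply Rabs_le. apply abs_bounds in Hab. split; nra.
Qed.

Lemma norm_expansion y h : y <> vzero ->
  Rabs (vnorm (vadd y h) - vnorm y - dot (normalize y) h) <= 2 * vnorm h * vnorm h / vnorm y.
Proof.
  intros Hy. pose proof (vnorm_pos y Hy).
  unfold normalize. rewrite dot_scall.
  replace (/ vnorm y * dot y h) with (dot y h / vnorm y) by (unfold Rdiv; ring).
  apply sqrt_expansion_bound; auto using vnorm_ge0.
  - rewrite !vnorm_sq, dot_vadd_self. ring.
  - apply cauchy_schwarz.
Qed.

Lemma normalize_norm y : y <> vzero -> vnorm (normalize y) = 1.
Proof.
  intros H. pose proof (vnorm_pos y H). unfold normalize.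
  rewrite vnorm_scal, Rabs_pos_eq by (left; apply Rinv_0_lt_compat; lra). field. lra.
Qed.

Lemma abs_div_bound X P M : 0 < P -> Rabs (X * P) <= M -> Rabs X <= M / P.
Proof.
  intros HP H. rewrite Rabs_mult, (Rabs_pos_eq P) in H by lra.
  apply (Rmult_le_reg_r P); auto. unfold Rdiv. rewrite Rmult_assoc, Rinv_l by lra. lra.
Qed.

Lemma norm_close y d : vnorm d <= vnorm y / 2 ->
  vnorm y / 2 <= vnorm (vadd y d) /\ Rabs (vnorm (vadd y d) - vnorm y) <= vnorm d.
Proof.
  intros H. pose proof (vnorm_rev_tri (vadd y d) y).
  replace (vsub (vadd y d) y) with d in H0 by vec_ring. split; auto.
  unfold Rabs in H0; destruct Rcase_abs in H0; lra.
Qed.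

Lemma inv_diff_bound a b k : 0 < b -> b / 2 <= a -> Rabs (a - b) <= k ->
  Rabs (/ a - / b) <= k / (a * b) /\ k / (a * b) <= 2 * k / (b * b).
Proof.
  intros Hb Ha Hk. pose proof (Rle_trans _ _ _ (Rabs_pos _) Hk) as Hk0. split.
  - apply abs_div_bound. nra. replace ((/a - /b) * (a*b)) with (b - a) by (field; lra).
    rewrite <- Rabs_Ropp, Ropp_minus_distr. auto.
  - unfold Rdiv. apply Rmult_le_reg_r with (a*b*b). { apply Rmult_lt_0_compat; [apply Rmult_lt_0_compat|]; lra. }
    replace (k * / (a * b) * (a * b * b)) with (b*k) by (field; lra).
    replace (2 * k * / (b * b) * (a * b * b)) with (2 * a * k) by (field; lra). nra.
Qed.

Lemma normalize_lipschitz y d : y <> vzero -> vnorm d <= vnorm y / 2 ->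
  vnorm (vsub (normalize (vadd y d)) (normalize y)) <= 4 * vnorm d / vnorm y.
Proof.
  intros Hy Hd. pose proof (vnorm_pos y Hy) as Hb.
  destruct (norm_close y d Hd) as [Ha Hab].
  set (a := vnorm (vadd y d)) in *. set (b := vnorm y) in *. set (k := vnorm d) in *.
  assert (E: vsub (normalize (vadd y d)) (normalize y) = vadd (vscal (/a) d) (vscal (/a - /b) y)).
  { unfold normalize. fold a b. vec_ring. }
  rewrite E. eapply Rle_trans. apply vnorm_triangle. rewrite !vnorm_scal. fold k b.
  assert (Hk: 0 <= k) by apply vnorm_ge0.
  rewrite Rabs_pos_eq by (left; apply Rinv_0_lt_compat; lra).
  destruct (inv_diff_bound a b k Hb Ha Hab) as [H1 H2].
  assert (Rabs (/ a - / b) * b <= k / a).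
  { eapply Rle_trans. apply Rmult_le_compat_r. lra. exact H1. right. field. lra. }
  assert (k / a <= 2 * k / b).
  { unfold Rdiv. apply Rmult_le_reg_r with (a*b). nra.
    replace (k * / a * (a*b)) with (k*b) by (field; lra).
    replace (2 * k * / b * (a * b)) with (2*k*a) by (field; lra). nra. }
  replace (/a * k) with (k/a) by (unfold Rdiv; ring). lra.
Qed.

Lemma normalize_second_order y d : y <> vzero -> vnorm d <= vnorm y / 2 ->
  vnorm (vsub (vsub (normalize (vadd y d)) (normalize y)) (dnormalize y d))
  <= 8 * (vnorm d * vnorm d) / (vnorm y * vnorm y).
Proof.
  intros Hy Hd. pose proof (vnorm_pos y Hy) as Hb.
  destruct (norm_close y d Hd) as [Ha Hab].
  pose proof (norm_expansion y d Hy) as He. pose proof (cauchy_schwarz y d) as Hs.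
  unfold normalize in He. rewrite dot_scall in He.
  set (a := vnorm (vadd y d)) in *. set (b := vnorm y) in *. set (k := vnorm d) in *.
  set (s := dot y d) in *.
  assert (Hk: 0 <= k) by apply vnorm_ge0.
  set (e := a - b - s / b) in *.
  replace (a - b - / b * s) with e in He by (unfold e, Rdiv; ring).
  assert (E: vsub (vsub (normalize (vadd y d)) (normalize y)) (dnormalize y d) =
     vadd (vscal (/a - /b + s / b^3) y) (vscal (/a - /b) d)).
  { unfold normalize, dnormalize. fold a b s. vec_ring. }
  rewrite E. eapply Rle_trans. apply vnorm_triangle. rewrite !vnorm_scal. fold k b.
  assert (H1: Rabs (/ a - / b + s / b ^ 3) <= 3 * b * k * k / (a * b^3)).
  { apply abs_div_bound. apply Rmult_lt_0_compat; [lra| apply pow_lt; lra].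
    replace ((/ a - / b + s / b ^ 3) * (a * b ^ 3)) with (s * (a - b) - e * b * b)
      by (unfold e; field; lra).
    eapply Rle_trans. apply Rabs_triang. rewrite Rabs_Ropp, !Rabs_mult, (Rabs_pos_eq b) by lra.
    assert (Rabs s * Rabs (a - b) <= (b*k) * k) by (apply Rmult_le_compat; auto using Rabs_pos).
    assert (Rabs e * b * b <= (2 * k * k / b) * b * b)
      by (apply Rmult_le_compat_r; [lra|]; apply Rmult_le_compat_r; lra).
    replace (2 * k * k / b * b * b) with (2 * k * k * b) in H0 by (field; lra). nra. }
  destruct (inv_diff_bound a b k Hb Ha Hab) as [H2 H2'].
  assert (H3: Rabs (/ a - / b + s / b ^ 3) * b <= 6 * k * k / (b * b)).
  { eapply Rle_trans. apply Rmult_le_compat_r. lra. exact H1.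
    unfold Rdiv. apply Rmult_le_reg_r with (a*b^3). apply Rmult_lt_0_compat; [lra| apply pow_lt; lra].
    replace (3 * b * k * k * / (a * b ^ 3) * b * (a * b ^ 3)) with (3*b*b*k*k) by (field; lra).
    replace (6 * k * k * / (b * b) * (a * b ^ 3)) with (6 * a * b * k * k) by (field; lra).
    assert (0 <= k*k) by nra. nra. }
  assert (H4: Rabs (/a - /b) * k <= 2 * k * k / (b * b)).
  { replace (2 * k * k / (b * b)) with (2 * k / (b * b) * k) by (field; lra).
    apply Rmult_le_compat_r; lra. }
  replace (8 * (k * k) / (b * b)) with (6 * k * k / (b * b) + 2 * k * k / (b * b)) by (field; lra).
  lra.
Qed.

Lemma dnormalize_proj y v : y <> vzero ->
  dnormalize y v = vscal (/ vnorm y) (vsub v (vscal (dot (normalize y) v) (normalize y))).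
Proof.
  intros H. pose proof (vnorm_pos y H). unfold dnormalize, normalize. rewrite dot_scall.
  set (b := vnorm y). assert (b <> 0) by (unfold b; lra). clearbody b. vec_split.
  all: field; auto.
Qed.

Lemma dnormalize_linear y : is_linear (dnormalize y).
Proof. split; intros; unfold dnormalize; rewrite ?dot_addr, ?dot_scalr; vec_ring. Qed.

(* The projection orthogonal to a unit vector u at most doubles norms
   (crude bound, enough for the estimates below). *)
Lemma proj_bound u v : vnorm u = 1 -> vnorm (vsub v (vscal (dot u v) u)) <= 2 * vnorm v.
Proof.
  intros Hu. eapply Rle_trans. apply vnorm_sub_le. rewrite vnorm_scal, Hu.
  pose proof (cauchy_schwarz u v). rewrite Hu in H. lra.
Qed.

Lemma dnormalize_bound y w : y <> vzero -> vnorm (dnormalize y w) <= 2 * vnorm w / vnorm y.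
Proof.
  intros H. pose proof (vnorm_pos y H). rewrite dnormalize_proj by auto. rewrite vnorm_scal.
  rewrite Rabs_pos_eq by (left; apply Rinv_0_lt_compat; lra).
  pose proof (proj_bound (normalize y) w (normalize_norm y H)). unfold Rdiv.
  rewrite Rmult_comm. apply Rmult_le_compat_r; auto. left; apply Rinv_0_lt_compat; lra.
Qed.

Lemma dnormalize_lipschitz y d v : y <> vzero -> vnorm d <= vnorm y / 2 ->
  vnorm (vsub (dnormalize (vadd y d) v) (dnormalize y v))
  <= 12 * vnorm d * vnorm v / (vnorm y * vnorm y).
Proof.
  intros Hy Hd. pose proof (vnorm_pos y Hy) as Hb.
  destruct (norm_close y d Hd) as [Ha Hab].
  assert (Hz: vadd y d <> vzero). { intro E. rewrite E, vnorm_zero in Ha. lra. }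
  pose proof (normalize_lipschitz y d Hy Hd) as Hu.
  rewrite !dnormalize_proj by auto.
  set (z := vadd y d) in *. set (u := normalize y) in *. set (u' := normalize z) in *.
  assert (Hun: vnorm u = 1) by (apply normalize_norm; auto).
  assert (Hun': vnorm u' = 1) by (apply normalize_norm; auto).
  set (a := vnorm z) in *. set (b := vnorm y) in *. set (k := vnorm d) in *.
  assert (Hk: 0 <= k) by apply vnorm_ge0. assert (Hv: 0 <= vnorm v) by apply vnorm_ge0.
  assert (E: vsub (vscal (/a) (vsub v (vscal (dot u' v) u'))) (vscal (/b) (vsub v (vscal (dot u v) u)))
     = vadd (vscal (/a - /b) (vsub v (vscal (dot u' v) u')))
            (vscal (/b) (vadd (vscal (dot (vsub u u') v) u) (vscal (dot u' v) (vsub u u'))))).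
  { rewrite dot_subl. vec_ring. }
  rewrite E. eapply Rle_trans. apply vnorm_triangle. rewrite !vnorm_scal.
  pose proof (proj_bound u' v Hun').
  destruct (inv_diff_bound a b k Hb Ha Hab) as [H2 H3].
  assert (Hw: vnorm (vadd (vscal (dot (vsub u u') v) u) (vscal (dot u' v) (vsub u u')))
              <= 2 * (4 * k / b) * vnorm v).
  { eapply Rle_trans. apply vnorm_triangle. rewrite !vnorm_scal, Hun.
    pose proof (cauchy_schwarz (vsub u u') v). pose proof (cauchy_schwarz u' v). rewrite Hun' in H1.
    rewrite vnorm_sub_sym in Hu. fold u u' in Hu.
    assert (0 <= vnorm (vsub u u')) by apply vnorm_ge0.
    assert (Rabs (dot u' v) * vnorm (vsub u u') <= vnorm v * (4 * k / b))
      by (apply Rmult_le_compat; auto using Rabs_pos; lra).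
    assert (Rabs (dot (vsub u u') v) <= (4 * k / b) * vnorm v).
    { eapply Rle_trans. exact H0. apply Rmult_le_compat_r; auto. }
    lra. }
  rewrite (Rabs_pos_eq (/b)) by (left; apply Rinv_0_lt_compat; lra).
  assert (T1: Rabs (/ a - / b) * vnorm (vsub v (vscal (dot u' v) u')) <= (2*k/(b*b)) * (2 * vnorm v)).
  { apply Rmult_le_compat; auto using Rabs_pos, vnorm_ge0. lra. }
  assert (T2: / b * vnorm (vadd (vscal (dot (vsub u u') v) u) (vscal (dot u' v) (vsub u u')))
              <= /b * (2 * (4 * k / b) * vnorm v)).
  { apply Rmult_le_compat_l; auto. left; apply Rinv_0_lt_compat; lra. }
  replace (/ b * (2 * (4 * k / b) * vnorm v)) with (8 * k * vnorm v / (b*b)) in T2 by (field; lra).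
  replace (2 * k / (b * b) * (2 * vnorm v)) with (4 * k * vnorm v / (b*b)) in T1 by (field; lra).
  replace (12 * k * vnorm v / (b * b)) with (8 * k * vnorm v / (b*b) + 4 * k * vnorm v / (b*b))
    by (field; lra).
  lra.
Qed.

Lemma vsub_neq0 x a : x <> a -> vsub x a <> vzero.
Proof. intros H E. apply H. rewrite <- (vsub_add x a), E. vec_ring. Qed.

Lemma has_grad_norm_sub x a : x <> a ->
  has_grad (fun z => vnorm (vsub z a)) x (normalize (vsub x a)).
Proof.
  intros Hxa eps Heps.
  pose proof (vsub_neq0 x a Hxa) as Hy. pose proof (vnorm_pos _ Hy) as Hb.
  exists (eps * vnorm (vsub x a) / 2). split. apply Rmult_lt_0_compat; [nra| lra].
  intros h Hh. replace (vsub (vadd x h) a) with (vadd (vsub x a) h) by vec_ring.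
  eapply Rle_trans. apply norm_expansion; auto.
  assert (0 <= vnorm h) by apply vnorm_ge0.
  unfold Rdiv. apply Rmult_le_reg_r with (vnorm (vsub x a)); auto.
  replace (2 * vnorm h * vnorm h * / vnorm (vsub x a) * vnorm (vsub x a)) with (2 * vnorm h * vnorm h) by (field; lra).
  assert (2 * vnorm h <= eps * vnorm (vsub x a)) by lra. nra.
Qed.

Lemma has_grad_ext f f' x g : has_grad f x g -> (forall z, f z = f' z) -> has_grad f' x g.
Proof.
  intros H E eps He. destruct (H eps He) as [d [Hd H']]. exists d; split; auto.
  intros h Hh. rewrite <- !E. auto.
Qed.

Lemma has_grad_add f1 f2 x g1 g2 : has_grad f1 x g1 -> has_grad f2 x g2 ->
  has_grad (fun z => f1 z + f2 z) x (vadd g1 g2).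
Proof.
  intros H1 H2 eps He.
  destruct (H1 (eps/2)) as [d1 [Hd1 H1']]; try lra. destruct (H2 (eps/2)) as [d2 [Hd2 H2']]; try lra.
  exists (Rmin d1 d2). split. apply Rmin_pos; auto.
  intros h Hh. specialize (H1' h ltac:(eapply Rlt_le_trans; [exact Hh| apply Rmin_l])).
  specialize (H2' h ltac:(eapply Rlt_le_trans; [exact Hh| apply Rmin_r])).
  rewrite dot_addl.
  replace (f1 (vadd x h) + f2 (vadd x h) - (f1 x + f2 x) - (dot g1 h + dot g2 h))
    with ((f1 (vadd x h) - f1 x - dot g1 h) + (f2 (vadd x h) - f2 x - dot g2 h)) by ring.
  eapply Rle_trans. apply Rabs_triang. lra.
Qed.

Lemma has_grad_const f x g k : has_grad f x g -> has_grad (fun z => f z - k) x g.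
Proof.
  intros H eps He. destruct (H eps He) as [d [Hd H']]. exists d; split; auto.
  intros h Hh. replace (f (vadd x h) - k - (f x - k) - dot g h) with (f (vadd x h) - f x - dot g h) by ring. auto.
Qed.

Lemma has_deriv_ext F F' x L : has_deriv F x L -> (forall z, F z = F' z) -> has_deriv F' x L.
Proof.
  intros [HL H] E. split; auto. intros eps He. destruct (H eps He) as [d [Hd H']]. exists d; split; auto.
  intros h Hh. rewrite <- !E. auto.
Qed.

Lemma has_deriv_add F1 F2 x L1 L2 : has_deriv F1 x L1 -> has_deriv F2 x L2 ->
  has_deriv (fun z => vadd (F1 z) (F2 z)) x (fun h => vadd (L1 h) (L2 h)).
Proof.
  intros [HL1 H1] [HL2 H2]. split.
  { destruct HL1 as [A1 S1]; destruct HL2 as [A2 S2]. split; intros; rewrite ?A1, ?A2, ?S1, ?S2; vec_ring. }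
  intros eps He.
  destruct (H1 (eps/2)) as [d1 [Hd1 H1']]; try lra. destruct (H2 (eps/2)) as [d2 [Hd2 H2']]; try lra.
  exists (Rmin d1 d2). split. apply Rmin_pos; auto.
  intros h Hh. specialize (H1' h ltac:(eapply Rlt_le_trans; [exact Hh| apply Rmin_l])).
  specialize (H2' h ltac:(eapply Rlt_le_trans; [exact Hh| apply Rmin_r])).
  replace (vsub (vsub (vadd (F1 (vadd x h)) (F2 (vadd x h))) (vadd (F1 x) (F2 x))) (vadd (L1 h) (L2 h)))
    with (vadd (vsub (vsub (F1 (vadd x h)) (F1 x)) (L1 h)) (vsub (vsub (F2 (vadd x h)) (F2 x)) (L2 h))).
  eapply Rle_trans. apply vnorm_triangle. lra.
  vec_ring.
Qed.

Lemma has_deriv_scal F x L c : has_deriv F x L ->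
  has_deriv (fun z => vscal c (F z)) x (fun h => vscal c (L h)).
Proof.
  intros [HL H]. split.
  { destruct HL as [A1 S1]. split; intros; rewrite ?A1, ?S1; vec_ring. }
  intros eps He.
  destruct (H (eps / (Rabs c + 1))) as [d [Hd H']]. apply Rdiv_lt_0_compat; auto; pose proof (Rabs_pos c); lra.
  exists d; split; auto. intros h Hh.
  replace (vsub (vsub (vscal c (F (vadd x h))) (vscal c (F x))) (vscal c (L h)))
    with (vscal c (vsub (vsub (F (vadd x h)) (F x)) (L h))) by vec_ring.
  rewrite vnorm_scal. specialize (H' h Hh). pose proof (Rabs_pos c). pose proof (vnorm_ge0 h).
  eapply Rle_trans. apply Rmult_le_compat_l. auto. exact H'.
  assert (Rabs c * (eps / (Rabs c + 1)) <= eps).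
  { unfold Rdiv. apply Rmult_le_reg_r with (Rabs c + 1). lra.
    replace (Rabs c * (eps * / (Rabs c + 1)) * (Rabs c + 1)) with (Rabs c * eps) by (field; lra). nra. }
  nra.
Qed.

Lemma has_deriv_sub_const a x : has_deriv (fun z => vsub z a) x (fun h => h).
Proof.
  split. split; intros; reflexivity. intros eps He. exists 1. split. lra.
  intros h Hh. replace (vsub (vsub (vsub (vadd x h) a) (vsub x a)) h) with vzero by vec_ring.
  rewrite vnorm_zero. pose proof (vnorm_ge0 h). nra.
Qed.

Lemma deriv_increment_bound G q L : has_deriv G q L ->
  exists K del, 0 <= K /\ 0 < del /\
    forall h, vnorm h < del -> vnorm (vsub (G (vadd q h)) (G q)) <= (K + 1) * vnorm h.
Proof.
  intros [HL H]. destruct (linear_bounded L HL) as [K [HK HLK]].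
  destruct (H 1 Rlt_0_1) as [d [Hd H1]].
  exists K, d. split; [auto| split; [auto|]]. intros h Hh.
  rewrite <- (vsub_add (vsub (G (vadd q h)) (G q)) (L h)).
  eapply Rle_trans. apply vnorm_triangle. pose proof (HLK h). specialize (H1 h Hh). lra.
Qed.

Lemma quadratic_error_small b K eps k x : 0 < b -> 0 <= K -> 0 < eps -> 0 <= k -> 0 <= x ->
  k <= (K + 1) * x -> x < eps * b * b / (16 * (K + 1) * (K + 1)) ->
  8 * (k * k) / (b * b) <= eps / 2 * x.
Proof.
  intros Hb HK He Hk Hx Hkx Hsmall.
  assert (k * k <= ((K+1) * x) * ((K+1) * x)) by (apply Rmult_le_compat; auto).
  unfold Rdiv. apply Rmult_le_reg_r with (b*b). nra.
  replace (8 * (k * k) * / (b * b) * (b * b)) with (8 * (k * k)) by (field; lra).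
  assert (x * (16 * (K + 1) * (K + 1)) <= eps * b * b).
  { apply Rmult_le_reg_r with (/ (16 * (K + 1) * (K + 1))). apply Rinv_0_lt_compat; nra.
    replace (x * (16 * (K + 1) * (K + 1)) * / (16 * (K + 1) * (K + 1))) with x by (field; lra).
    lra. }
  nra.
Qed.

Lemma has_deriv_normalize G q L : has_deriv G q L -> G q <> vzero ->
  has_deriv (fun x => normalize (G x)) q (fun h => dnormalize (G q) (L h)).
Proof.
  intros HD Hg. pose proof HD as [HL H]. split.
  { split; intros.
    - rewrite (lin_add L), (lin_add (dnormalize (G q))); auto using dnormalize_linear.
    - rewrite (lin_scal L), (lin_scal (dnormalize (G q))); auto using dnormalize_linear. }
  pose proof (vnorm_pos _ Hg) as Hb. set (b := vnorm (G q)) in *.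
  destruct (deriv_increment_bound G q L HD) as [K [d0 [HK [Hd0 Hinc]]]].
  intros eps He.
  destruct (H (eps * b / 4)) as [d1 [Hd1 H1]]; [nra|].
  set (d2 := b / (2 * (K+1))). set (d3 := eps * b * b / (16 * (K+1) * (K+1))).
  assert (Hd2: 0 < d2) by (apply Rdiv_lt_0_compat; lra).
  assert (Hd3: 0 < d3).
  { unfold d3. apply Rdiv_lt_0_compat.
    - repeat apply Rmult_lt_0_compat; lra.
    - repeat apply Rmult_lt_0_compat; lra. }
  exists (Rmin (Rmin d0 d1) (Rmin d2 d3)). split. { repeat apply Rmin_pos; auto. }
  intros h Hh.
  destruct (Rmin_Rgt_l _ _ _ Hh) as [Hh01 Hh23].
  destruct (Rmin_Rgt_l _ _ _ Hh01) as [Hh0 Hh1]. destruct (Rmin_Rgt_l _ _ _ Hh23) as [Hh2 Hh3].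
  specialize (H1 h Hh1).
  set (d := vsub (G (vadd q h)) (G q)).
  assert (Hn0: 0 <= vnorm h) by apply vnorm_ge0.
  assert (Hd: vnorm d <= (K + 1) * vnorm h) by (apply Hinc; auto).
  assert (Hd2': vnorm d <= b / 2).
  { eapply Rle_trans. exact Hd. apply Rmult_le_reg_l with (/ (K+1)). apply Rinv_0_lt_compat; lra.
    replace (/ (K + 1) * ((K + 1) * vnorm h)) with (vnorm h) by (field; lra).
    replace (/ (K + 1) * (b/2)) with d2 by (unfold d2; field; lra). lra. }
  (* second order expansion of normalize at G q, plus the linear error of G *)
  pose proof (normalize_second_order (G q) d Hg Hd2') as HS.
  replace (vadd (G q) d) with (G (vadd q h)) in HS by (unfold d; vec_ring).
  fold b in HS.
  replace (vsub (vsub (normalize (G (vadd q h))) (normalize (G q))) (dnormalize (G q) (L h)))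
    with (vadd (vsub (vsub (normalize (G (vadd q h))) (normalize (G q))) (dnormalize (G q) d))
               (dnormalize (G q) (vsub d (L h)))).
  2:{ rewrite lin_sub by apply dnormalize_linear. vec_ring. }
  eapply Rle_trans. apply vnorm_triangle.
  pose proof (dnormalize_bound (G q) (vsub d (L h)) Hg) as HB. fold b in HB.
  assert (T1: 8 * (vnorm d * vnorm d) / (b * b) <= eps / 2 * vnorm h)
    by (apply (quadratic_error_small b K eps); auto using vnorm_ge0; lra).
  assert (T2: 2 * vnorm (vsub d (L h)) / b <= eps / 2 * vnorm h).
  { unfold Rdiv. apply Rmult_le_reg_r with b. lra.
    replace (2 * vnorm (vsub d (L h)) * / b * b) with (2 * vnorm (vsub d (L h))) by (field; lra).
    unfold d. nra. }
  lra.
Qed.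

Lemma deriv_unique F x L1 L2 : has_deriv F x L1 -> has_deriv F x L2 -> forall v, L1 v = L2 v.
Proof.
  intros [HL1 H1] [HL2 H2] v.
  assert (Hz: vnorm (vsub (L1 v) (L2 v)) = 0).
  { destruct (Req_dec (vnorm v) 0) as [Hv|Hv].
    { apply vnorm_eq0 in Hv. subst. rewrite !lin_zero by auto. replace (vsub vzero vzero) with vzero by vec_ring. apply vnorm_zero. }
    pose proof (vnorm_ge0 v). assert (Hvp: 0 < vnorm v) by lra.
    apply Rle_antisym; [|apply vnorm_ge0].
    apply Rnot_lt_le. intros Hlt.
    set (m := vnorm (vsub (L1 v) (L2 v))) in *.
    set (eps := m / (4 * vnorm v)).
    assert (He: 0 < eps) by (apply Rdiv_lt_0_compat; lra).
    destruct (H1 eps He) as [d1 [Hd1 H1']]. destruct (H2 eps He) as [d2 [Hd2 H2']].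
    set (t := Rmin d1 d2 / (2 * vnorm v)).
    assert (Ht: 0 < t) by (apply Rdiv_lt_0_compat; [apply Rmin_pos|]; lra).
    assert (Htv: vnorm (vscal t v) = t * vnorm v) by (rewrite vnorm_scal, Rabs_pos_eq; lra).
    assert (Htv2: t * vnorm v < Rmin d1 d2).
    { unfold t. replace (Rmin d1 d2 / (2 * vnorm v) * vnorm v) with (Rmin d1 d2 / 2) by (field; lra).
      pose proof (Rmin_pos d1 d2 Hd1 Hd2). lra. }
    specialize (H1' (vscal t v) ltac:(rewrite Htv; eapply Rlt_le_trans; [exact Htv2| apply Rmin_l])).
    specialize (H2' (vscal t v) ltac:(rewrite Htv; eapply Rlt_le_trans; [exact Htv2| apply Rmin_r])).
    rewrite Htv in H1', H2'.
    assert (E: vscal t (vsub (L1 v) (L2 v)) = vsub (vsub (vsub (F (vadd x (vscal t v))) (F x)) (L2 (vscal t v)))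
              (vsub (vsub (F (vadd x (vscal t v))) (F x)) (L1 (vscal t v)))).
    { rewrite (lin_scal L1 t v HL1), (lin_scal L2 t v HL2). vec_ring. }
    pose proof (vnorm_sub_le (vsub (vsub (F (vadd x (vscal t v))) (F x)) (L2 (vscal t v)))
              (vsub (vsub (F (vadd x (vscal t v))) (F x)) (L1 (vscal t v)))).
    rewrite <- E, vnorm_scal, Rabs_pos_eq in H0 by lra. fold m in H0.
    assert (HH: t * m <= 2 * eps * (t * vnorm v)) by lra.
    unfold eps in HH. replace (2 * (m / (4 * vnorm v)) * (t * vnorm v)) with (t * m / 2) in HH by (field; lra).
    nra. }
  apply vnorm_eq0 in Hz. rewrite <- (vsub_add (L1 v) (L2 v)), Hz. vec_ring.
Qed.

Lemma derivable_sub_quadratic f A B c l : derivable_pt_lim f c l ->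
  derivable_pt_lim (fun t => f t - (t*A + t*t*B)) c (l - (A + 2*c*B)).
Proof.
  intros Hf.
  replace (l - (A + 2*c*B)) with (l - ((1*A + c*0) + ((1*c + c*1)*B + c*c*0))) by ring.
  apply (derivable_pt_lim_minus f (fun t => t*A + t*t*B)); auto.
  apply (derivable_pt_lim_plus (fun t => t*A) (fun t => t*t*B)).
  - apply (derivable_pt_lim_mult (fun t => t) (fun _ => A)).
    + apply derivable_pt_lim_id.
    + apply derivable_pt_lim_const.
  - apply (derivable_pt_lim_mult (fun t => t*t) (fun _ => B)).
    + apply (derivable_pt_lim_mult (fun t => t) (fun t => t)); apply derivable_pt_lim_id.
    + apply derivable_pt_lim_const.
Qed.

Lemma derivable_along_line F g q w t : has_grad F (vadd q (vscal t w)) g ->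
  derivable_pt_lim (fun s => F (vadd q (vscal s w))) t (dot g w).
Proof.
  intros H eps He.
  pose proof (vnorm_ge0 w).
  destruct (H (eps / (2 * (vnorm w + 1)))) as [d [Hd H']]. apply Rdiv_lt_0_compat; lra.
  assert (Hd2: 0 < d / (vnorm w + 1)) by (apply Rdiv_lt_0_compat; lra).
  exists (mkposreal _ Hd2). intros s Hs0 Hs. simpl in Hs.
  assert (Hsw: vnorm (vscal s w) < d).
  { rewrite vnorm_scal. apply Rle_lt_trans with (Rabs s * (vnorm w + 1)). pose proof (Rabs_pos s); nra.
    apply Rmult_lt_reg_r with (/ (vnorm w + 1)). apply Rinv_0_lt_compat; lra.
    replace (Rabs s * (vnorm w + 1) * / (vnorm w + 1)) with (Rabs s) by (field; lra). exact Hs. }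
  specialize (H' _ Hsw). replace (vadd (vadd q (vscal t w)) (vscal s w)) with (vadd q (vscal (t + s) w)) in H' by vec_ring.
  rewrite dot_scalr, vnorm_scal in H'.
  assert (Hsp: 0 < Rabs s) by (apply Rabs_pos_lt; auto).
  replace ((F (vadd q (vscal (t + s) w)) - F (vadd q (vscal t w))) / s - dot g w)
    with ((F (vadd q (vscal (t + s) w)) - F (vadd q (vscal t w)) - s * dot g w) / s) by (field; auto).
  unfold Rdiv at 1. rewrite Rabs_mult, Rabs_inv.
  apply Rle_lt_trans with (eps / (2 * (vnorm w + 1)) * (Rabs s * vnorm w) * / Rabs s).
  apply Rmult_le_compat_r; auto. left; apply Rinv_0_lt_compat; auto.
  replace (eps / (2 * (vnorm w + 1)) * (Rabs s * vnorm w) * / Rabs s) with (eps * vnorm w / (2 * (vnorm w + 1))) by (field; lra).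
  apply Rmult_lt_reg_r with (2 * (vnorm w + 1)). lra.
  replace (eps * vnorm w / (2 * (vnorm w + 1)) * (2 * (vnorm w + 1))) with (eps * vnorm w) by (field; lra). nra.
Qed.

(* Second order Taylor formula at q, from the mean value theorem applied
   to the restriction of F to the segment [q, q + h]. *)
Lemma taylor2 F G L q r : 0 < r -> (forall x, ball q r x -> has_grad F x (G x)) -> has_deriv G q L ->
  forall eps, 0 < eps -> exists del, 0 < del /\ forall h, vnorm h < del ->
   Rabs (F (vadd q h) - F q - dot (G q) h - / 2 * dot (L h) h) <= eps * (vnorm h * vnorm h).
Proof.
  intros Hr Hg [HL HD] eps He.
  destruct (HD eps He) as [d [Hd HD']].
  exists (Rmin r d). split. apply Rmin_pos; auto. intros h Hh.
  assert (Hh1: vnorm h < r) by (eapply Rlt_le_trans; [exact Hh| apply Rmin_l]).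
  assert (Hh2: vnorm h < d) by (eapply Rlt_le_trans; [exact Hh| apply Rmin_r]).
  set (A := dot (G q) h). set (B := / 2 * dot (L h) h).
  set (k := fun t => F (vadd q (vscal t h)) - (t*A + t*t*B)).
  assert (Hder: forall c, 0 <= c <= 1 -> derivable_pt_lim k c (dot (G (vadd q (vscal c h))) h - (A + 2*c*B))).
  { intros c Hc. apply derivable_sub_quadratic. apply derivable_along_line. apply Hg. unfold ball.
    replace (vsub (vadd q (vscal c h)) q) with (vscal c h) by vec_ring. rewrite vnorm_scal, Rabs_pos_eq by lra.
    pose proof (vnorm_ge0 h). nra. }
  destruct (MVT_cor2 k _ 0 1 Rlt_0_1 Hder) as [c [Hc1 Hc2]].
  assert (E1: k 1 = F (vadd q h) - A - B) by (unfold k; replace (vadd q (vscal 1 h)) with (vadd q h) by vec_ring; ring).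
  assert (E0: k 0 = F q) by (unfold k; replace (vadd q (vscal 0 h)) with q by vec_ring; ring).
  rewrite E1, E0 in Hc1.
  replace (F (vadd q h) - F q - A - B) with (dot (G (vadd q (vscal c h))) h - (A + 2 * c * B)) by lra.
  assert (Hch: vnorm (vscal c h) < d) by (rewrite vnorm_scal, Rabs_pos_eq by lra; pose proof (vnorm_ge0 h); nra).
  specialize (HD' _ Hch).
  replace (dot (G (vadd q (vscal c h))) h - (A + 2 * c * B))
    with (dot (vsub (vsub (G (vadd q (vscal c h))) (G q)) (L (vscal c h))) h).
  2:{ unfold A, B. rewrite !dot_subl, (lin_scal L), dot_scall by auto. field. }
  eapply Rle_trans. apply cauchy_schwarz.
  rewrite vnorm_scal, Rabs_pos_eq in HD' by lra.
  pose proof (vnorm_ge0 h).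
  apply Rle_trans with (eps * (c * vnorm h) * vnorm h). apply Rmult_le_compat_r; auto.
  assert (0 <= eps * vnorm h * vnorm h) by (apply Rmult_le_pos; [apply Rmult_le_pos|]; lra).
  nra.
Qed.

Lemma grad_continuity F x g : has_grad F x g -> forall eps, 0 < eps -> exists del, 0 < del /\
  forall h, vnorm h < del -> Rabs (F (vadd x h) - F x) <= eps.
Proof.
  intros H eps He. pose proof (vnorm_ge0 g).
  destruct (H 1 Rlt_0_1) as [d [Hd H']].
  exists (Rmin d (eps / (vnorm g + 1))). split. apply Rmin_pos; auto. apply Rdiv_lt_0_compat; lra.
  intros h Hh. specialize (H' h ltac:(eapply Rlt_le_trans; [exact Hh|apply Rmin_l])).
  assert (Hh2: vnorm h < eps / (vnorm g + 1)) by (eapply Rlt_le_trans; [exact Hh|apply Rmin_r]).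
  pose proof (cauchy_schwarz g h).
  replace (F (vadd x h) - F x) with ((F (vadd x h) - F x - dot g h) + dot g h) by ring.
  eapply Rle_trans. apply Rabs_triang.
  assert (vnorm h * (vnorm g + 1) <= eps).
  { apply Rmult_le_reg_r with (/ (vnorm g + 1)). apply Rinv_0_lt_compat; lra.
    replace (vnorm h * (vnorm g + 1) * / (vnorm g + 1)) with (vnorm h) by (field; lra).
    unfold Rdiv in Hh2. lra. }
  nra.
Qed.

Lemma eq0_of_small a K del : 0 < del -> (forall e, 0 < e < del -> Rabs a <= K * e) -> a = 0.
Proof.
  intros Hd H. destruct (Req_dec a 0); auto. exfalso.
  assert (Ha: 0 < Rabs a) by (apply Rabs_pos_lt; auto).
  assert (HK: 0 <= K). { specialize (H (del/2) ltac:(lra)). destruct (Rle_dec 0 K); auto. nra. }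
  set (e := Rmin (del/2) (Rabs a / (2 * (K + 1)))).
  assert (He: 0 < e) by (apply Rmin_pos; [lra| apply Rdiv_lt_0_compat; lra]).
  assert (He1: e <= del / 2) by apply Rmin_l.
  assert (He2: e * (2 * (K+1)) <= Rabs a).
  { apply Rmult_le_reg_r with (/ (2 * (K+1))). apply Rinv_0_lt_compat; lra.
    replace (e * (2 * (K + 1)) * / (2 * (K + 1))) with e by (field; lra). apply Rmin_r. }
  specialize (H e ltac:(lra)). nra.
Qed.

Lemma taylor1 F G L q r : 0 < r -> (forall x, ball q r x -> has_grad F x (G x)) -> has_deriv G q L ->
  exists K del, 0 <= K /\ 0 < del /\ forall w, vnorm w < del ->
    Rabs (F (vadd q w) - F q - dot (G q) w) <= K * (vnorm w * vnorm w).
Proof.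
  intros Hr Hg HD. destruct (taylor2 F G L q r Hr Hg HD 1 Rlt_0_1) as [d [Hd HT]].
  destruct HD as [HL _]. destruct (linear_bounded L HL) as [K [HK HLK]].
  exists (1 + K), d. split; [lra| split; auto]. intros w Hw. specialize (HT w Hw).
  pose proof (cauchy_schwarz (L w) w). pose proof (HLK w). pose proof (vnorm_ge0 w).
  assert (Rabs (dot (L w) w) <= K * vnorm w * vnorm w).
  { eapply Rle_trans. exact H. apply Rmult_le_compat_r; auto. }
  replace (F (vadd q w) - F q - dot (G q) w)
    with ((F (vadd q w) - F q - dot (G q) w - / 2 * dot (L w) w) + /2 * dot (L w) w) by ring.
  eapply Rle_trans. apply Rabs_triang. rewrite Rabs_mult, (Rabs_pos_eq (/2)) by lra. nra.
Qed.

Definition normal_data (F : R3 -> R) (G : R3 -> R3) (L : R3 -> R3) (q : R3) (r : R)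
    (n : R3) (sg : R) : Prop :=
  0 < r /\ (forall x, ball q r x -> has_grad F x (G x)) /\ has_deriv G q L /\ F q = 0 /\
  G q <> vzero /\ (sg = 1 \/ sg = -1) /\ n = vscal (sg / vnorm (G q)) (G q).

(* Height coefficient in the tangent direction v: near q the level set is
   the graph t = height_coef * h^2 + o(h^2) over q + h v, along n.  It is
   half the normal curvature <S v, v> with respect to n. *)
Definition height_coef (G L : R3 -> R3) (q : R3) (sg : R) (v : R3) : R :=
  - sg * dot (L v) v / (2 * vnorm (G q)).

Definition chart_pt (q v n : R3) (h t : R) : R3 := vadd q (vadd (vscal h v) (vscal t n)).

Lemma normal_data_facts F G L q r n sg : normal_data F G L q r n sg ->
  vnorm n = 1 /\ dot (G q) n = sg * vnorm (G q) /\ sg * sg = 1 /\ 0 < vnorm (G q).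
Proof.
  intros (Hr & Hg & HD & HF & Hg0 & Hsg & Hn). pose proof (vnorm_pos _ Hg0) as Hb.
  assert (sg * sg = 1) by (destruct Hsg; subst; ring).
  subst n. repeat split; auto.
  - rewrite vnorm_scal. unfold Rdiv. rewrite Rabs_mult, Rabs_inv, (Rabs_pos_eq (vnorm _)) by lra.
    destruct Hsg; subst sg; [rewrite Rabs_R1| rewrite Rabs_left by lra]; field; lra.
  - rewrite dot_scalr, <- vnorm_sq. field; lra.
Qed.

Lemma normal_data_tangent_n F G L q r n sg v :
  normal_data F G L q r n sg -> dot (G q) v = 0 -> dot n v = 0.
Proof. intros (Hr & Hg & HD & HF & Hg0 & Hsg & Hn) Hv. subst n. rewrite dot_scall, Hv. ring. Qed.

Lemma normal_data_tangent F G L q r n sg v :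
  normal_data F G L q r n sg -> dot n v = 0 -> dot (G q) v = 0.
Proof.
  intros Hs Hnv. destruct (normal_data_facts _ _ _ _ _ _ _ Hs) as (_ & _ & _ & Hb).
  destruct Hs as (_ & _ & _ & _ & _ & Hsg & Hn). subst n. rewrite dot_scall in Hnv.
  assert (sg / vnorm (G q) <> 0).
  { unfold Rdiv. apply Rmult_integral_contrapositive. split.
    intro; subst; lra. apply Rinv_neq_0_compat; lra. }
  apply Rmult_integral in Hnv. destruct Hnv; auto. contradiction.
Qed.

Lemma normal_data_sign F G L q r n sg : normal_data F G L q r n sg -> Rabs sg = 1.
Proof.
  intros (_ & _ & _ & _ & _ & Hsg & _).
  destruct Hsg; subst; [apply Rabs_R1| rewrite Rabs_left; lra].
Qed.

Lemma sign_factor sg a b : sg * sg = 1 -> sg * a - b = sg * (a - sg * b).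
Proof. intros H. replace (sg * (a - sg * b)) with (sg * a - (sg * sg) * b) by ring. rewrite H. ring. Qed.

Lemma level_fn_expansion F G L q r n sg v : normal_data F G L q r n sg -> dot (G q) v = 0 ->
  forall eps, 0 < eps -> exists del, 0 < del /\ forall h t, Rabs h < del -> Rabs t < del ->
  Rabs (F (chart_pt q v n h t) - (sg * vnorm (G q) * (t - height_coef G L q sg v * (h*h)) +
       / 2 * (h * t * (dot (L v) n + dot (L n) v) + t * t * dot (L n) n)))
   <= eps * (h * h * dot v v + t * t).
Proof.
  intros Hs Hv eps He.
  destruct (normal_data_facts _ _ _ _ _ _ _ Hs) as (Hn1 & Hgn & Hsg2 & Hb).
  pose proof (normal_data_tangent_n _ _ _ _ _ _ _ v Hs Hv) as Hnv.
  destruct Hs as (Hr & Hg & HD & HF & Hg0 & Hsg & Hn).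
  destruct (taylor2 F G L q r Hr Hg HD eps He) as [d [Hd HT]].
  pose proof (vnorm_ge0 v).
  exists (d / (vnorm v + 1)). split. apply Rdiv_lt_0_compat; lra.
  intros h t Hh Ht.
  set (w := vadd (vscal h v) (vscal t n)).
  assert (Hw2: dot w w = h * h * dot v v + t * t).
  { unfold w. rewrite !dot_addl, !dot_addr, !dot_scall, !dot_scalr. rewrite ?(dot_comm v n), ?Hnv.
    rewrite <- (vnorm_sq n), Hn1. ring. }
  assert (Hwn: vnorm w < d).
  { unfold w. eapply Rle_lt_trans. apply vnorm_triangle. rewrite !vnorm_scal, Hn1.
    apply Rlt_le_trans with ((d / (vnorm v + 1)) * (vnorm v + 1)). 2:{ right; field; lra. }
    pose proof (Rabs_pos h); pose proof (Rabs_pos t).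
    assert (0 < d / (vnorm v + 1)) by (apply Rdiv_lt_0_compat; lra). nra. }
  specialize (HT w Hwn). rewrite vnorm_sq, Hw2 in HT.
  unfold chart_pt. fold w. rewrite HF in HT.
  replace (F (vadd q w) - (sg * vnorm (G q) * (t - height_coef G L q sg v * (h * h)) +
     / 2 * (h * t * (dot (L v) n + dot (L n) v) + t * t * dot (L n) n)))
   with (F (vadd q w) - 0 - dot (G q) w - / 2 * dot (L w) w); auto.
  unfold w. destruct HD as [HL _]. rewrite (lin_add L), !(lin_scal L) by auto.
  rewrite !dot_addl, !dot_addr, !dot_scall, !dot_scalr, Hv, Hgn.
  unfold height_coef. field_simplify; [|lra]. rewrite (dot_comm (L v) v).
  replace (sg ^ 2) with 1 by (simpl; lra). field_simplify; lra.
Qed.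

Lemma parabolic_linear h t C : 0 <= C -> Rabs h <= 1 -> Rabs t <= C * (h * h) ->
  Rabs t <= C * Rabs h.
Proof.
  intros HC Hh Ht. pose proof (Rabs_pos h).
  assert (Hhh: h * h = Rabs h * Rabs h) by (rewrite <- Rabs_mult; rewrite Rabs_pos_eq; nra).
  rewrite Hhh in Ht. eapply Rle_trans. exact Ht. apply Rmult_le_compat_l; nra.
Qed.

Lemma parabolic_cross_terms h t X Y C : 0 <= C -> Rabs h <= 1 -> Rabs t <= C * (h * h) ->
  Rabs (/ 2 * (h * t * X + t * t * Y)) <= / 2 * (Rabs X * C + Rabs Y * C * C) * Rabs h * (h * h).
Proof.
  intros HC Hh Ht.
  assert (Hhh: h * h = Rabs h * Rabs h) by (rewrite <- Rabs_mult; rewrite Rabs_pos_eq; nra).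
  pose proof (parabolic_linear h t C HC Hh Ht) as Ht1.
  rewrite Rabs_mult, Rabs_pos_eq by lra.
  eapply Rle_trans. apply Rmult_le_compat_l. lra. apply Rabs_triang.
  rewrite !Rabs_mult. pose proof (Rabs_pos X). pose proof (Rabs_pos Y). pose proof (Rabs_pos h).
  assert (Rabs t * Rabs t <= (C * (h*h)) * (C * Rabs h)) by (apply Rmult_le_compat; auto using Rabs_pos).
  assert (Rabs h * Rabs t * Rabs X <= Rabs h * (C * (h * h)) * Rabs X).
  { apply Rmult_le_compat_r; auto. apply Rmult_le_compat_l; auto. }
  assert (Rabs t * Rabs t * Rabs Y <= (C * (h*h)) * (C * Rabs h) * Rabs Y)
    by (apply Rmult_le_compat_r; auto).
  nra.
Qed.

Lemma parabolic_size h t V C : 0 <= V -> Rabs h <= 1 -> Rabs t <= C * (h * h) ->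
  h * h * V + t * t <= (V + C * C) * (h * h).
Proof.
  intros HV Hh Ht.
  assert (Hhh: h * h <= 1)
    by (rewrite <- (Rabs_pos_eq (h*h)) by nra; rewrite Rabs_mult; pose proof (Rabs_pos h); nra).
  replace (t*t) with (Rabs t * Rabs t) by (rewrite <- Rabs_mult; apply Rabs_pos_eq; nra).
  assert (Rabs t * Rabs t <= (C*(h*h)) * (C * (h*h))) by (apply Rmult_le_compat; auto using Rabs_pos).
  nra.
Qed.

Lemma parabolic_small h t C d : 0 <= C -> 0 < d -> Rabs h <= 1 -> Rabs t <= C * (h * h) ->
  Rabs h < d / (C + 1) -> Rabs h < d /\ Rabs t < d.
Proof.
  intros HC Hd Hh1 Ht Hh. pose proof (Rabs_pos h).
  pose proof (parabolic_linear h t C HC Hh1 Ht) as Ht1.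
  assert (Hh': Rabs h * (C + 1) < d).
  { apply Rmult_lt_reg_r with (/ (C + 1)). apply Rinv_0_lt_compat; lra.
    replace (Rabs h * (C + 1) * / (C + 1)) with (Rabs h) by (field; lra). exact Hh. }
  split; nra.
Qed.

Lemma small_multiple K eta x : 0 <= K -> 0 < eta -> 0 <= x -> x < eta / (2 * K + 1) -> K * x <= eta / 2.
Proof.
  intros HK He Hx Hlt.
  assert (x * (2 * K + 1) < eta).
  { apply Rmult_lt_reg_r with (/ (2 * K + 1)). apply Rinv_0_lt_compat; lra.
    replace (x * (2 * K + 1) * / (2 * K + 1)) with x by (field; lra). exact Hlt. }
  nra.
Qed.

Lemma fraction_le_half A eta : 0 <= A -> 0 < eta -> eta / (2 * (A + 1)) * A <= eta / 2.
Proof.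
  intros HA He. unfold Rdiv. apply Rmult_le_reg_r with (2 * (A + 1)). lra.
  replace (eta * / (2 * (A + 1)) * A * (2 * (A + 1))) with (eta * A) by (field; lra).
  replace (eta * / 2 * (2 * (A + 1))) with (eta * A + eta) by field. lra.
Qed.

(* In the parabolic region, F is sg |G q| (t - height_coef h^2) up to o(h^2):
   the remaining terms of the second order expansion are O(|h| h^2). *)
Lemma level_fn_near_chart F G L q r n sg v : normal_data F G L q r n sg -> dot (G q) v = 0 ->
  forall C eta, 0 < C -> 0 < eta -> exists del, 0 < del /\
  forall h t, Rabs h < del -> Rabs t <= C * (h*h) ->
  Rabs (F (chart_pt q v n h t) - sg * vnorm (G q) * (t - height_coef G L q sg v * (h*h)))
    <= eta * (h*h).
Proof.
  intros Hs Hv C eta HC Heta.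
  set (X := dot (L v) n + dot (L n) v). set (Y := dot (L n) n). set (V := dot v v).
  set (K := / 2 * (Rabs X * C + Rabs Y * C * C)).
  assert (HK: 0 <= K) by (unfold K; pose proof (Rabs_pos X); pose proof (Rabs_pos Y); nra).
  assert (HV: 0 <= V) by apply dot_ge0.
  set (e2 := eta / (2 * (V + C*C + 1))).
  assert (He2: 0 < e2) by (apply Rdiv_lt_0_compat; nra).
  destruct (level_fn_expansion F G L q r n sg v Hs Hv e2 He2) as [d0 [Hd0 HE]].
  exists (Rmin 1 (Rmin (d0 / (C + 1)) (eta / (2 * K + 1)))). split.
  { repeat apply Rmin_pos; try apply Rdiv_lt_0_compat; lra. }
  intros h t Hh Ht.
  destruct (Rmin_Rgt_l _ _ _ Hh) as [Hh1 Hh']. destruct (Rmin_Rgt_l _ _ _ Hh') as [Hh2 Hh3].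
  destruct (parabolic_small h t C d0 ltac:(lra) Hd0 ltac:(lra) Ht Hh2) as [Hh0 Ht0].
  specialize (HE h t Hh0 Ht0). fold X Y V in HE.
  pose proof (parabolic_cross_terms h t X Y C ltac:(lra) ltac:(lra) Ht) as HR. fold K in HR.
  pose proof (parabolic_size h t V C HV ltac:(lra) Ht) as HS.
  pose proof (small_multiple K eta (Rabs h) HK Heta (Rabs_pos h) Hh3) as HR1.
  assert (Hhh: 0 <= h * h) by nra.
  assert (HE2: e2 * (h * h * V + t * t) <= eta / 2 * (h*h)).
  { apply Rle_trans with (e2 * (V + C * C) * (h*h)).
    - rewrite (Rmult_assoc e2 (V + C * C)). apply Rmult_le_compat_l; [lra| exact HS].
    - apply Rmult_le_compat_r; auto. unfold e2. apply fraction_le_half; nra. }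
  set (R0 := / 2 * (h * t * X + t * t * Y)) in *.
  replace (F (chart_pt q v n h t) - sg * vnorm (G q) * (t - height_coef G L q sg v * (h * h)))
    with ((F (chart_pt q v n h t) - (sg * vnorm (G q) * (t - height_coef G L q sg v * (h * h)) + R0)) + R0)
    by ring.
  eapply Rle_trans. apply Rabs_triang.
  assert (Rabs R0 <= eta / 2 * (h*h)) by (eapply Rle_trans; [exact HR|]; apply Rmult_le_compat_r; nra).
  lra.
Qed.

Lemma chart_pt_in_ball q v n h t C rho : vnorm n = 1 -> 0 < rho -> 0 <= C ->
  Rabs h <= 1 -> Rabs h < rho / (vnorm v + C + 1) -> Rabs t <= C * (h * h) ->
  ball q rho (chart_pt q v n h t).
Proof.
  intros Hn Hrho HC Hh1 Hh Ht. pose proof (vnorm_ge0 v). pose proof (Rabs_pos h).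
  assert (Hhh: h * h = Rabs h * Rabs h) by (rewrite <- Rabs_mult; rewrite Rabs_pos_eq; nra).
  pose proof (parabolic_linear h t C HC Hh1 Ht) as Ht1.
  unfold ball, chart_pt. rewrite vadd_sub_l.
  eapply Rle_lt_trans. apply vnorm_triangle. rewrite !vnorm_scal, Hn.
  apply Rle_lt_trans with ((vnorm v + C + 1) * Rabs h). nra.
  apply Rmult_lt_reg_r with (/ (vnorm v + C + 1)). apply Rinv_0_lt_compat; lra.
  replace ((vnorm v + C + 1) * Rabs h * / (vnorm v + C + 1)) with (Rabs h) by (field; lra).
  exact Hh.
Qed.

Lemma abs_le_of_near t a e : Rabs (t - a) <= e -> Rabs t <= Rabs a + e.
Proof. intros H. replace t with ((t - a) + a) by ring. pose proof (Rabs_triang (t - a) a). lra. Qed.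

Lemma zero_near_affine f a e b : 0 < e -> 0 < b ->
  (forall t, a - e <= t <= a + e -> continuity_pt f t) ->
  (forall t, a - e <= t <= a + e -> Rabs (f t - b * (t - a)) <= b * e / 2) ->
  exists z, Rabs (z - a) <= e /\ f z = 0.
Proof.
  intros He Hb Hcont Hclose.
  assert (Hbe: 0 < b * e) by (apply Rmult_lt_0_compat; auto).
  assert (Hfm: f (a - e) < 0).
  { pose proof (Hclose (a - e) ltac:(lra)) as Hm. apply abs_bounds in Hm.
    replace (b * (a - e - a)) with (- (b * e)) in Hm by ring. lra. }
  assert (Hfp: 0 < f (a + e)).
  { pose proof (Hclose (a + e) ltac:(lra)) as Hp. apply abs_bounds in Hp.
    replace (b * (a + e - a)) with (b * e) in Hp by ring. lra. }
  destruct (Ranalysis5.IVT_interv f (a - e) (a + e) Hcont ltac:(lra) Hfm Hfp) as [z [Hz Hfz]].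
  exists z. split; auto. apply Rabs_le. lra.
Qed.

Lemma continuous_along_normal F G q v n h sg a r :
  (forall x, ball q r x -> has_grad F x (G x)) -> ball q r (chart_pt q v n h a) ->
  continuity_pt (fun t => sg * F (chart_pt q v n h t)) a.
Proof.
  intros Hg Hball. apply derivable_continuous_pt.
  assert (Hline: forall t, chart_pt q v n h t = vadd (vadd q (vscal h v)) (vscal t n))
    by (intros; unfold chart_pt; vec_ring).
  rewrite Hline in Hball.
  exists (sg * dot (G (vadd (vadd q (vscal h v)) (vscal a n))) n).
  apply (derivable_pt_lim_ext (fun t => sg * F (vadd (vadd q (vscal h v)) (vscal t n)))).
  { intros t. rewrite Hline. reflexivity. }
  apply (derivable_pt_lim_scal (fun t => F (vadd (vadd q (vscal h v)) (vscal t n)))).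
  apply derivable_along_line, Hg, Hball.
Qed.

Lemma level_set_point F G L q r n sg v : normal_data F G L q r n sg -> dot (G q) v = 0 ->
  forall eps, 0 < eps -> exists del, 0 < del /\ forall h, 0 < Rabs h < del ->
  exists t, Rabs (t - height_coef G L q sg v * (h*h)) <= eps * (h*h) /\ F (chart_pt q v n h t) = 0.
Proof.
  intros Hs Hv eps He.
  destruct (normal_data_facts _ _ _ _ _ _ _ Hs) as (Hn1 & _ & Hsg2 & Hb).
  pose proof (normal_data_sign _ _ _ _ _ _ _ Hs) as Hsgabs.
  pose proof Hs as (Hr & Hg & _ & _ & _ & Hsg & _).
  set (tau0 := height_coef G L q sg v). set (b := vnorm (G q)) in *.
  set (C := Rabs tau0 + eps). assert (HC: 0 < C) by (pose proof (Rabs_pos tau0); unfold C; lra).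
  destruct (level_fn_near_chart F G L q r n sg v Hs Hv C (b * eps / 2) HC ltac:(nra))
    as [d0 [Hd0 HR]].
  pose proof (vnorm_ge0 v).
  exists (Rmin 1 (Rmin d0 (r / (vnorm v + C + 1)))). split.
  { repeat apply Rmin_pos; try apply Rdiv_lt_0_compat; lra. }
  intros h [Hh0 Hh].
  destruct (Rmin_Rgt_l _ _ _ Hh) as [Hh1 Hh']. destruct (Rmin_Rgt_l _ _ _ Hh') as [Hhd Hhr].
  assert (Hh2pos: 0 < h * h)
    by (assert (h <> 0) by (intro; subst; rewrite Rabs_R0 in Hh0; lra); nra).
  assert (Hin: forall t, tau0 * (h*h) - eps * (h*h) <= t <= tau0 * (h*h) + eps * (h*h) ->
                         Rabs t <= C * (h*h)).
  { intros t Ht. unfold C. pose proof (Rle_abs tau0). pose proof (Rle_abs (-tau0)).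
    rewrite Rabs_Ropp in *. apply Rabs_le. split; nra. }
  destruct (zero_near_affine (fun t => sg * F (chart_pt q v n h t)) (tau0 * (h*h)) (eps * (h*h)) b
              ltac:(nra) Hb) as [z [Hz Hfz]].
  - intros t Ht. apply (continuous_along_normal F G q v n h sg t r Hg).
    apply (chart_pt_in_ball q v n h t C r); auto; lra.
  - intros t Ht. specialize (HR h t Hhd (Hin t Ht)). fold b tau0 in HR.
    rewrite (sign_factor sg _ _ Hsg2), Rabs_mult, Hsgabs, <- (Rmult_assoc sg b).
    replace (b * (eps * (h * h)) / 2) with (b * eps / 2 * (h * h)) by field. lra.
  - exists z. split; auto. destruct Hsg; subst sg; lra.
Qed.

Lemma level_points_parabolic F G L q r n sg v rho : normal_data F G L q r n sg -> dot (G q) v = 0 ->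
  0 < rho -> forall eps, 0 < eps -> exists del, 0 < del /\ forall h, 0 < Rabs h < del ->
  exists t, Rabs (t - height_coef G L q sg v * (h*h)) <= eps * (h*h) /\
    Rabs t <= (Rabs (height_coef G L q sg v) + eps) * (h * h) /\
    F (chart_pt q v n h t) = 0 /\ ball q rho (chart_pt q v n h t).
Proof.
  intros Hs Hv Hrho eps He.
  destruct (normal_data_facts _ _ _ _ _ _ _ Hs) as (Hn1 & _ & _ & _).
  destruct (level_set_point F G L q r n sg v Hs Hv eps He) as [d [Hd HP]].
  set (C := Rabs (height_coef G L q sg v) + eps).
  assert (HC: 0 <= C) by (pose proof (Rabs_pos (height_coef G L q sg v)); unfold C; lra).
  pose proof (vnorm_ge0 v).
  exists (Rmin 1 (Rmin d (rho / (vnorm v + C + 1)))). split.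
  { repeat apply Rmin_pos; try apply Rdiv_lt_0_compat; lra. }
  intros h [Hh0 Hh].
  destruct (Rmin_Rgt_l _ _ _ Hh) as [Hh1 Hh']. destruct (Rmin_Rgt_l _ _ _ Hh') as [Hhd Hhr].
  destruct (HP h (conj Hh0 Hhd)) as [t [Ht HF]].
  pose proof (abs_le_of_near _ _ _ Ht) as Ht'.
  assert (Ht2: Rabs t <= C * (h * h)).
  { eapply Rle_trans. exact Ht'. rewrite Rabs_mult, (Rabs_pos_eq (h*h)) by nra. unfold C. lra. }
  exists t. repeat split; auto.
  apply (chart_pt_in_ball q v n h t C rho); auto; lra.
Qed.

Lemma height_coef_le_of_side F1 G1 L1 r1 sg1 F2 G2 L2 r2 sg2 q n v :
  normal_data F1 G1 L1 q r1 n sg1 -> normal_data F2 G2 L2 q r2 n sg2 -> dot (G1 q) v = 0 ->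
  (exists rho, 0 < rho /\ forall x, ball q rho x -> F1 x = 0 -> sg2 * F2 x <= 0) ->
  height_coef G1 L1 q sg1 v <= height_coef G2 L2 q sg2 v.
Proof.
  intros H1 H2 Hv [rho [Hrho Hside]].
  assert (Hv2: dot (G2 q) v = 0)
    by exact (normal_data_tangent _ _ _ _ _ _ _ v H2 (normal_data_tangent_n _ _ _ _ _ _ _ v H1 Hv)).
  destruct (normal_data_facts _ _ _ _ _ _ _ H2) as (_ & _ & Hsg2 & Hb2).
  pose proof (normal_data_sign _ _ _ _ _ _ _ H2) as Hs2.
  set (t1 := height_coef G1 L1 q sg1 v). set (t2 := height_coef G2 L2 q sg2 v).
  apply Rnot_lt_le. intros Hlt.
  set (eps := (t1 - t2) / 4). assert (He: 0 < eps) by (unfold eps; lra).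
  destruct (level_points_parabolic F1 G1 L1 q r1 n sg1 v rho H1 Hv Hrho eps He) as [da [Hda HA]].
  set (C := Rabs t1 + eps). assert (HC: 0 < C) by (pose proof (Rabs_pos t1); unfold C; lra).
  set (b2 := vnorm (G2 q)) in *.
  destruct (level_fn_near_chart F2 G2 L2 q r2 n sg2 v H2 Hv2 C (b2 * eps) HC ltac:(nra))
    as [db [Hdb HB]].
  set (h := Rmin da db / 2).
  assert (Hh0: 0 < h) by (unfold h; pose proof (Rmin_pos da db Hda Hdb); lra).
  assert (Hah: Rabs h = h) by (apply Rabs_pos_eq; lra).
  assert (Hha: h < da) by (unfold h; pose proof (Rmin_l da db); lra).
  assert (Hhb: h < db) by (unfold h; pose proof (Rmin_r da db); lra).
  destruct (HA h ltac:(rewrite Hah; lra)) as [t [Ht1 [Ht2 [HF1 Hball]]]].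
  fold t1 in Ht1. specialize (Hside _ Hball HF1).
  specialize (HB h t ltac:(rewrite Hah; lra) Ht2). fold t2 b2 in HB.
  (* sg2 F2 = b2 (t - t2 h^2) + O(eps h^2) is positive since t ~ t1 h^2 *)
  assert (HB': Rabs (sg2 * F2 (chart_pt q v n h t) - b2 * (t - t2 * (h*h))) <= b2 * eps * (h*h)).
  { rewrite (sign_factor sg2 _ _ Hsg2), Rabs_mult, Hs2, <- (Rmult_assoc sg2 b2). lra. }
  assert (t - t2 * (h*h) >= 3 * eps * (h*h)).
  { assert (t1 * (h*h) - t <= eps * (h*h)) by (apply abs_bounds in Ht1; lra).
    assert (t1 - t2 = 4 * eps) by (unfold eps; field). nra. }
  assert (0 < b2 * eps * (h*h)) by (apply Rmult_lt_0_compat; nra).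
  apply abs_bounds in HB'. nra.
Qed.

Lemma level_points_first_order F1 G1 L1 r1 sg1 n q v F2 G2 L2 r2 rho :
  normal_data F1 G1 L1 q r1 n sg1 -> dot (G1 q) v = 0 ->
  0 < r2 -> (forall x, ball q r2 x -> has_grad F2 x (G2 x)) -> has_deriv G2 q L2 -> F2 q = 0 ->
  0 < rho -> exists M del, 0 <= M /\ 0 < del /\ forall h, 0 < Rabs h < del ->
    exists x, F1 x = 0 /\ ball q rho x /\ Rabs (F2 x - h * dot (G2 q) v) <= M * (h*h).
Proof.
  intros H1 Hv Hr2 Hg2 HD2 HF2 Hrho.
  destruct (normal_data_facts _ _ _ _ _ _ _ H1) as (Hn1 & _ & _ & _).
  destruct (taylor1 F2 G2 L2 q r2 Hr2 Hg2 HD2) as [K [dT [HK [HdT HT]]]].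
  assert (Hrho': 0 < Rmin rho dT) by (apply Rmin_pos; auto).
  destruct (level_points_parabolic F1 G1 L1 q r1 n sg1 v (Rmin rho dT) H1 Hv Hrho' 1 Rlt_0_1)
    as [da [Hda HA]].
  set (C := Rabs (height_coef G1 L1 q sg1 v) + 1).
  assert (HC: 0 < C) by (pose proof (Rabs_pos (height_coef G1 L1 q sg1 v)); unfold C; lra).
  pose proof (vnorm_ge0 v). set (g2 := G2 q).
  exists (K * (vnorm v + C) * (vnorm v + C) + C * vnorm g2), (Rmin 1 da). split; [| split].
  { pose proof (vnorm_ge0 g2). apply Rplus_le_le_0_compat; repeat apply Rmult_le_pos; lra. }
  { apply Rmin_pos; lra. }
  intros h [Hh0 Hh]. destruct (Rmin_Rgt_l _ _ _ Hh) as [Hh1 Hha].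
  destruct (HA h (conj Hh0 Hha)) as [t [_ [Ht [HF1 Hball]]]]. fold C in Ht.
  exists (chart_pt q v n h t). split; [auto| split].
  { unfold ball in *; eapply Rlt_le_trans; [exact Hball| apply Rmin_l]. }
  assert (Hhh: h * h = Rabs h * Rabs h) by (rewrite <- Rabs_mult; rewrite Rabs_pos_eq; nra).
  pose proof (parabolic_linear h t C ltac:(lra) ltac:(lra) Ht) as Ht'.
  (* x = q + w with w = h v + t n, |w| = O(h) and <g2, w> = h <g2, v> + O(h^2) *)
  set (w := vadd (vscal h v) (vscal t n)).
  change (chart_pt q v n h t) with (vadd q w) in *.
  assert (Hw: vnorm w <= (vnorm v + C) * Rabs h).
  { unfold w. eapply Rle_trans. apply vnorm_triangle. rewrite !vnorm_scal, Hn1. nra. }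
  assert (Hwd: vnorm w < dT).
  { unfold ball in Hball. rewrite vadd_sub_l in Hball. eapply Rlt_le_trans. exact Hball. apply Rmin_r. }
  specialize (HT w Hwd). rewrite HF2 in HT.
  assert (Hdot: dot g2 w = h * dot g2 v + t * dot g2 n) by (unfold w; rewrite dot_addr, !dot_scalr; ring).
  assert (Hw2: vnorm w * vnorm w <= (vnorm v + C) * (vnorm v + C) * (h*h)).
  { rewrite Hhh. pose proof (vnorm_ge0 w).
    assert (0 <= (vnorm v + C) * Rabs h) by (pose proof (Rabs_pos h); nra). nra. }
  assert (Htn: Rabs (t * dot g2 n) <= C * vnorm g2 * (h*h)).
  { rewrite Rabs_mult. pose proof (cauchy_schwarz g2 n). rewrite Hn1 in H0.
    assert (Rabs t * Rabs (dot g2 n) <= (C * (h*h)) * (vnorm g2 * 1))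
      by (apply Rmult_le_compat; auto using Rabs_pos).
    nra. }
  replace (F2 (vadd q w) - h * dot g2 v) with ((F2 (vadd q w) - 0 - dot (G2 q) w) + t * dot g2 n)
    by (fold g2; rewrite Hdot; ring).
  eapply Rle_trans. apply Rabs_triang.
  assert (K * (vnorm w * vnorm w) <= K * ((vnorm v + C) * (vnorm v + C) * (h * h)))
    by (apply Rmult_le_compat_l; auto).
  nra.
Qed.

Lemma grad_orthogonal_of_side F1 G1 L1 r1 sg1 n q v F2 G2 L2 r2 s :
  normal_data F1 G1 L1 q r1 n sg1 -> dot (G1 q) v = 0 ->
  0 < r2 -> (forall x, ball q r2 x -> has_grad F2 x (G2 x)) -> has_deriv G2 q L2 -> F2 q = 0 ->
  (exists rho, 0 < rho /\ forall x, ball q rho x -> F1 x = 0 -> 0 <= s * F2 x) ->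
  s * dot (G2 q) v = 0.
Proof.
  intros H1 Hv Hr2 Hg2 HD2 HF2 [rho [Hrho Hside]].
  destruct (level_points_first_order F1 G1 L1 r1 sg1 n q v F2 G2 L2 r2 rho H1 Hv Hr2 Hg2 HD2 HF2 Hrho)
    as [M [del [HM [Hdel HP]]]].
  set (g2 := G2 q) in *.
  assert (Key: forall h, 0 < Rabs h < del -> - (Rabs s * M * (h*h)) <= s * h * dot g2 v).
  { intros h Hh. destruct (HP h Hh) as [x [HF1 [Hball Hx]]].
    specialize (Hside x Hball HF1).
    assert (s * F2 x - s * (h * dot g2 v) <= Rabs s * (M * (h*h))).
    { replace (s * F2 x - s * (h * dot g2 v)) with (s * (F2 x - h * dot g2 v)) by ring.
      eapply Rle_trans. apply Rle_abs. rewrite Rabs_mult. apply Rmult_le_compat_l. apply Rabs_pos. lra. }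
    lra. }
  (* both signs of h force s <g2, v> = 0 *)
  apply (eq0_of_small _ (Rabs s * M) del Hdel).
  intros e He.
  pose proof (Key e ltac:(rewrite Rabs_pos_eq; lra)).
  pose proof (Key (-e) ltac:(rewrite Rabs_Ropp, Rabs_pos_eq; lra)).
  assert (- (Rabs s * M * e) <= s * dot g2 v) by (apply Rmult_le_reg_r with e; nra).
  assert (- (Rabs s * M * e) <= - (s * dot g2 v)) by (apply Rmult_le_reg_r with e; nra).
  apply Rabs_le. lra.
Qed.


Lemma has_deriv_extL F x L L' : has_deriv F x L -> (forall h, L h = L' h) -> has_deriv F x L'.
Proof.
  intros [[A S] H] E. split. split; intros; rewrite <- !E; auto.
  intros eps He. destruct (H eps He) as [d [Hd H']]. exists d. split; auto.
  intros h Hh. rewrite <- E. auto.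
Qed.

Lemma ball_center q r : 0 < r -> ball q r q.
Proof. intros. unfold ball. replace (vsub q q) with vzero by vec_ring. rewrite vnorm_zero. auto. Qed.

Lemma ball_le q r r' x : r <= r' -> ball q r x -> ball q r' x.
Proof. unfold ball. lra. Qed.

Lemma level_normal_data M q r F G sg : local_level M q r F G -> M q -> (sg = 1 \/ sg = -1) ->
  exists L, normal_data F G L q r (vscal (sg / vnorm (G q)) (G q)) sg.
Proof.
  intros (Hr & [Hg [DG [HD _]]] & Hnz & HM) Hq Hsg.
  assert (Hq': ball q r q) by (apply ball_center; auto).
  exists (DG q).
  refine (conj Hr (conj Hg (conj (HD q Hq') (conj _ (conj (Hnz q Hq') (conj Hsg eq_refl)))))).
  apply HM; auto.
Qed.

Lemma level_zero_sets M q r1 F1 G1 r2 F2 G2 :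
  local_level M q r1 F1 G1 -> local_level M q r2 F2 G2 ->
  exists rho, 0 < rho /\ forall x, ball q rho x -> F1 x = 0 -> F2 x = 0.
Proof.
  intros (Hr1 & _ & _ & HM1) (Hr2 & _ & _ & HM2).
  exists (Rmin r1 r2). split. apply Rmin_pos; auto.
  intros x Hx Hf.
  apply HM2. apply (ball_le q (Rmin r1 r2)); [apply Rmin_r| auto].
  apply HM1; auto. apply (ball_le q (Rmin r1 r2)); [apply Rmin_l| auto].
Qed.

Lemma tangent_plane_iff M q r0 F0 G0 L0 n sg0 :
  normal_data F0 G0 L0 q r0 n sg0 -> local_level M q r0 F0 G0 ->
  forall v, tangent_plane M q v <-> dot n v = 0.
Proof.
  intros Hs0 Hll0 v. split.
  - intros [Hq [r1 [F1 [G1 [Hll1 Hv1]]]]].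
    destruct (level_normal_data M q r1 F1 G1 1 Hll1 Hq (or_introl eq_refl)) as [L1 Hs1].
    pose proof Hs0 as (Hr0 & Hg0 & HD0 & HF0 & _ & _ & _).
    destruct (level_zero_sets M q r1 F1 G1 r0 F0 G0 Hll1 Hll0) as [rho [Hrho Hzero]].
    assert (E: 1 * dot (G0 q) v = 0).
    { apply (grad_orthogonal_of_side F1 G1 L1 r1 1 _ q v F0 G0 L0 r0 1 Hs1 Hv1 Hr0 Hg0 HD0 HF0).
      exists rho. split; auto. intros x Hx Hf. rewrite (Hzero x Hx Hf). lra. }
    apply (normal_data_tangent_n _ _ _ _ _ _ _ v Hs0). lra.
  - intros Hnv. split.
    + destruct Hll0 as (Hr & _ & _ & HM). apply HM. apply ball_center; auto.
      destruct Hs0 as (_ & _ & _ & ? & _); auto.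
    + exists r0, F0, G0. split; auto. eapply normal_data_tangent; eauto.
Qed.

Lemma height_coef_unique M q r1 F1 G1 L1 sg1 r2 F2 G2 L2 sg2 n v :
  local_level M q r1 F1 G1 -> normal_data F1 G1 L1 q r1 n sg1 ->
  local_level M q r2 F2 G2 -> normal_data F2 G2 L2 q r2 n sg2 -> dot n v = 0 ->
  height_coef G1 L1 q sg1 v = height_coef G2 L2 q sg2 v.
Proof.
  intros Hl1 Hs1 Hl2 Hs2 Hnv.
  destruct (level_zero_sets M q r1 F1 G1 r2 F2 G2 Hl1 Hl2) as [rho12 [H12 Z12]].
  destruct (level_zero_sets M q r2 F2 G2 r1 F1 G1 Hl2 Hl1) as [rho21 [H21 Z21]].
  apply Rle_antisym.
  - eapply height_coef_le_of_side; eauto. eapply normal_data_tangent; eauto.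
    exists rho12. split; auto. intros x Hx Hf. rewrite (Z12 x Hx Hf). lra.
  - eapply height_coef_le_of_side; eauto. eapply normal_data_tangent; eauto.
    exists rho21. split; auto. intros x Hx Hf. rewrite (Z21 x Hx Hf). lra.
Qed.

Lemma normalize_normal_field sg y : vscal (sg / vnorm y) y = vscal sg (normalize y).
Proof. unfold normalize. vec_ring. Qed.

Lemma shape_op_exists M q r F G sg : local_level M q r F G -> M q -> (sg = 1 \/ sg = -1) ->
  exists S, shape_op M q (vscal (sg / vnorm (G q)) (G q)) S.
Proof.
  intros Hll Hq Hsg. pose proof Hll as (Hr & [Hg [DG [HD _]]] & Hnz & HM).
  exists (fun v => vscal (- sg) (dnormalize (G q) (DG q v))).
  split; auto. exists r, F, G. split; auto. exists sg. split; auto. cbv zeta. split; auto.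
  assert (Hq': ball q r q) by (apply ball_center; auto).
  pose proof (has_deriv_scal _ _ _ sg (has_deriv_normalize G q (DG q) (HD q Hq') (Hnz q Hq'))) as H.
  eapply has_deriv_ext. eapply has_deriv_extL. exact H.
  - intros h. simpl. vec_ring.
  - intros z. simpl. rewrite normalize_normal_field. reflexivity.
Qed.

Lemma shape_op_quadratic M q n S : shape_op M q n S ->
  exists F G L r sg, local_level M q r F G /\ normal_data F G L q r n sg /\
    forall v, dot (G q) v = 0 -> dot (S v) v = 2 * height_coef G L q sg v.
Proof.
  intros [Hq [r [F [G [Hll [sg [Hsg HN]]]]]]]. cbv zeta in HN. destruct HN as [Hn HDN].
  destruct (level_normal_data M q r F G sg Hll Hq Hsg) as [L Hs].
  exists F, G, L, r, sg. split; auto. rewrite <- Hn. split; auto.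
  intros v Hv. pose proof Hs as (Hr & Hg & HD & HF & Hg0 & _ & _).
  pose proof (has_deriv_scal _ _ _ sg (has_deriv_normalize G q L HD Hg0)) as H.
  assert (H': has_deriv (fun x => vscal (sg / vnorm (G x)) (G x)) q
                (fun h => vscal sg (dnormalize (G q) (L h)))).
  { eapply has_deriv_ext. exact H. intros z. rewrite normalize_normal_field. reflexivity. }
  pose proof (deriv_unique _ _ _ _ HDN H' v) as E.
  assert (E2: dot (vscal (-1) (S v)) v = dot (vscal sg (dnormalize (G q) (L v))) v)
    by (rewrite E; reflexivity).
  rewrite !dot_scall in E2. unfold dnormalize in E2. rewrite dot_subl, !dot_scall, Hv in E2.
  pose proof (vnorm_pos _ Hg0). unfold height_coef. rewrite (dot_comm (G q) (L v)) in E2.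
  replace (dot (S v) v) with (- (-1 * dot (S v) v)) by ring. rewrite E2. field. lra.
Qed.


Lemma ball_shift q r x h : ball q r x -> vnorm h < r - vnorm (vsub x q) -> ball q r (vadd x h).
Proof.
  unfold ball. intros Hx Hh. replace (vsub (vadd x h) q) with (vadd (vsub x q) h) by vec_ring.
  eapply Rle_lt_trans. apply vnorm_triangle. lra.
Qed.

Lemma continuity_in_ball F g q r x : ball q r x -> has_grad F x g ->
  forall e, 0 < e -> exists d, 0 < d /\
    forall y, vnorm (vsub y x) < d -> ball q r y /\ Rabs (F y - F x) <= e.
Proof.
  intros Hx Hg e He.
  assert (Hrho: 0 < r - vnorm (vsub x q)) by (unfold ball in Hx; lra).
  destruct (grad_continuity F x g Hg e He) as [d [Hd Hd']].
  exists (Rmin d (r - vnorm (vsub x q))). split. apply Rmin_pos; auto. intros y Hy.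
  replace y with (vadd x (vsub y x)) by vec_ring. split.
  - apply ball_shift; auto. eapply Rlt_le_trans; [exact Hy| apply Rmin_r].
  - apply Hd'. eapply Rlt_le_trans; [exact Hy| apply Rmin_l].
Qed.

(* Near a zero x of F with nonzero gradient, F takes both signs: moving
   along -+ grad F(x) gives points y arbitrarily close to x with sgn F y > 0. *)
Lemma signs_near_regular_zero F g q r x : ball q r x -> has_grad F x g -> g <> vzero ->
  F x = 0 -> forall e sgn, 0 < e -> (sgn = 1 \/ sgn = -1) ->
  exists y, ball q r y /\ ball x e y /\ sgn * F y > 0.
Proof.
  intros Hx Hg Hnz HF0 e sgn He Hsgn. pose proof (vnorm_pos _ Hnz) as Hb.
  set (rho := r - vnorm (vsub x q)). assert (Hrho: 0 < rho) by (unfold rho, ball in *; lra).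
  destruct (Hg (vnorm g / 2) ltac:(lra)) as [d [Hd Hd']].
  set (m := Rmin e (Rmin d rho)).
  assert (Hm: 0 < m) by (apply Rmin_pos; [| apply Rmin_pos]; lra).
  pose proof (Rmin_l e (Rmin d rho)). pose proof (Rmin_r e (Rmin d rho)).
  pose proof (Rmin_l d rho). pose proof (Rmin_r d rho). fold m in H, H0.
  set (t := m / (2 * vnorm g)).
  assert (Ht: 0 < t) by (unfold t; apply Rdiv_lt_0_compat; lra).
  assert (Hh: vnorm (vscal (sgn * t) g) = m / 2).
  { rewrite vnorm_scal, Rabs_mult, (Rabs_pos_eq t) by lra.
    replace (Rabs sgn) with 1 by (destruct Hsgn; subst; [rewrite Rabs_R1| rewrite Rabs_left]; lra).
    unfold t. field. lra. }
  exists (vadd x (vscal (sgn * t) g)). split; [|split].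
  - apply ball_shift; auto. fold rho. lra.
  - unfold ball. rewrite vadd_sub_l. lra.
  - specialize (Hd' (vscal (sgn * t) g) ltac:(lra)).
    rewrite HF0, dot_scalr, <- vnorm_sq in Hd'. rewrite vnorm_scal, Rabs_mult, (Rabs_pos_eq t) in Hd' by lra.
    assert (Hpos: 0 < t * (vnorm g * vnorm g)) by (apply Rmult_lt_0_compat; nra).
    apply abs_bounds in Hd'. destruct Hsgn; subst sgn.
    + rewrite Rabs_R1 in Hd'. lra.
    + rewrite Rabs_left in Hd' by lra. lra.
Qed.

(* Points of the boundary in the ball are the zeros of F: a boundary point
   is approached from inside (F < 0) and from outside (F >= 0), and a zero
   of F is such a point because F changes sign across it. *)
Lemma boundary_local_level D q r F G : local_def_fn D q r F G -> local_level (boundary D) q r F G.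
Proof.
  intros (Hr & HC2 & Hnz & HD). pose proof HC2 as [Hg _].
  split; auto. split; auto. split; auto. intros x Hx.
  split.
  -
    intros [Hcl Hcl'].
    destruct (Rtotal_order (F x) 0) as [Hlt|[Heq|Hgt]]; auto; exfalso.
    + destruct (continuity_in_ball F (G x) q r x Hx (Hg x Hx) (- F x / 2) ltac:(lra)) as [d [Hd Hd']].
      destruct (Hcl' d Hd) as [y [Hy1 Hy2]]. destruct (Hd' y Hy2) as [Hyb Hy].
      apply Hy1. apply HD; auto. apply abs_bounds in Hy. lra.
    + destruct (continuity_in_ball F (G x) q r x Hx (Hg x Hx) (F x / 2) ltac:(lra)) as [d [Hd Hd']].
      destruct (Hcl d Hd) as [y [Hy1 Hy2]]. destruct (Hd' y Hy2) as [Hyb Hy].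
      apply HD in Hy1; auto. apply abs_bounds in Hy. lra.
  - intros HF0. split.
    + intros e He.
      destruct (signs_near_regular_zero F (G x) q r x Hx (Hg x Hx) (Hnz x Hx) HF0 e (-1) He
                  (or_intror eq_refl)) as [y [Hy1 [Hy2 Hy3]]].
      exists y. split; auto. apply HD; auto. lra.
    + intros e He.
      destruct (signs_near_regular_zero F (G x) q r x Hx (Hg x Hx) (Hnz x Hx) HF0 e 1 He
                  (or_introl eq_refl)) as [y [Hy1 [Hy2 Hy3]]].
      exists y. split; auto. intro HDy. apply HD in HDy; auto. lra.
Qed.


Lemma norm_convex u w t : 0 <= t <= 1 ->
  vnorm (vadd (vscal (1 - t) u) (vscal t w)) <= (1 - t) * vnorm u + t * vnorm w.
Proof.
  intros Ht. eapply Rle_trans. apply vnorm_triangle.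
  rewrite !vnorm_scal, !Rabs_pos_eq by lra. lra.
Qed.

Lemma phi_convex a b y y' t : 0 <= t <= 1 ->
  phi (vadd a (vscal t (vsub b a))) y y' <= (1 - t) * phi a y y' + t * phi b y y'.
Proof.
  intros Ht. unfold phi.
  replace (vsub y (vadd a (vscal t (vsub b a))))
    with (vadd (vscal (1 - t) (vsub y a)) (vscal t (vsub y b))) by vec_ring.
  replace (vsub (vadd a (vscal t (vsub b a))) y')
    with (vadd (vscal (1 - t) (vsub a y')) (vscal t (vsub b y'))) by vec_ring.
  pose proof (norm_convex (vsub y a) (vsub y b) t Ht).
  pose proof (norm_convex (vsub a y') (vsub b y') t Ht). lra.
Qed.

Lemma phi_lower x y y' : vnorm (vsub y y') <= phi x y y'.
Proof. unfold phi. apply vnorm_sub_tri. Qed.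

Lemma phi_at_focus p p' : phi p' p p' = vnorm (vsub p p').
Proof. unfold phi. replace (vsub p' p') with vzero by vec_ring. rewrite vnorm_zero. ring. Qed.

Lemma phi_at_first_focus p p' : phi p p p' = vnorm (vsub p p').
Proof. unfold phi. replace (vsub p p) with vzero by vec_ring. rewrite vnorm_zero. ring. Qed.

Lemma in_closure (D : R3 -> Prop) x : D x -> closure D x.
Proof.
  intros H r Hr. exists x. split; auto. unfold ball.
  replace (vsub x x) with vzero by vec_ring. rewrite vnorm_zero; auto.
Qed.

Lemma not_closure_open (D : R3 -> Prop) y : ~ closure D y ->
  exists r, 0 < r /\ forall z, vnorm (vsub z y) < r -> ~ closure D z.
Proof.
  intros H. unfold closure in H.
  assert (exists r, 0 < r /\ forall w, D w -> ~ ball y r w).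
  { apply Classical_Prop.NNPP. intro Hn. apply H. intros r Hr. apply Classical_Prop.NNPP. intro Hn2.
    apply Hn. exists r. split; auto. intros w Hw Hb. apply Hn2. exists w. auto. }
  destruct H0 as [r [Hr Hw]]. exists (r/2). split. lra.
  intros z Hz Hcl. destruct (Hcl (r/2) ltac:(lra)) as [w [Hw1 Hw2]]. apply (Hw w Hw1).
  unfold ball in *. eapply Rle_lt_trans. apply (vnorm_sub_tri w z y). lra.
Qed.

Lemma segment_points_close p x u t e : 0 < e ->
  Rabs (u - t) <= e / (2 * (vnorm (vsub x p) + 1)) ->
  vnorm (vsub (vadd p (vscal u (vsub x p))) (vadd p (vscal t (vsub x p)))) < e.
Proof.
  intros He Hut. pose proof (vnorm_ge0 (vsub x p)).
  replace (vsub (vadd p (vscal u (vsub x p))) (vadd p (vscal t (vsub x p))))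
    with (vscal (u - t) (vsub x p)) by vec_ring.
  rewrite vnorm_scal.
  apply Rle_lt_trans with (e / (2 * (vnorm (vsub x p) + 1)) * vnorm (vsub x p)).
  - apply Rmult_le_compat_r; auto.
  - apply Rmult_lt_reg_r with (2 * (vnorm (vsub x p) + 1)). lra.
    replace (e / (2 * (vnorm (vsub x p) + 1)) * vnorm (vsub x p) * (2 * (vnorm (vsub x p) + 1)))
      with (e * vnorm (vsub x p)) by (field; lra).
    nra.
Qed.

(* On a segment from p outside the closure of D to x in it, there is a
   first point of the closure: the supremum ts of the parameters t such
   that [p, p + t (x - p)] avoids the closure. *)
Lemma segment_first_closure_point (D : R3 -> Prop) p x : ~ closure D p -> closure D x ->
  exists ts, 0 < ts <= 1 /\ closure D (vadd p (vscal ts (vsub x p))) /\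
    forall u, 0 <= u < ts -> ~ closure D (vadd p (vscal u (vsub x p))).
Proof.
  intros Hp Hx.
  set (gam := fun t => vadd p (vscal t (vsub x p))).
  assert (Hgam0: gam 0 = p) by (unfold gam; vec_ring).
  set (E := fun t => 0 <= t <= 1 /\ forall u, 0 <= u <= t -> ~ closure D (gam u)).
  assert (HE0: E 0).
  { split. lra. intros u Hu. replace u with 0 by lra. rewrite Hgam0. auto. }
  assert (Hbd: bound E) by (exists 1; intros t [Ht _]; lra).
  destruct (completeness E Hbd (ex_intro _ 0 HE0)) as [ts [Hub Hlub]].
  assert (Hts0: 0 <= ts) by (apply Hub; auto).
  assert (Hts1: ts <= 1) by (apply Hlub; intros t [Ht _]; lra).
  assert (Hbelow: forall u, 0 <= u < ts -> ~ closure D (gam u)).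
  { intros u Hu. apply Classical_Prop.NNPP. intro Hn.
    assert (Hup: is_upper_bound E u).
    { intros t [Ht Ht']. apply Rnot_lt_le. intros Hut. apply (Ht' u). lra.
      apply Classical_Prop.NNPP; auto. }
    specialize (Hlub u Hup). lra. }
  (* gam ts is in the closure, otherwise ts could be increased *)
  assert (Hcl: closure D (gam ts)).
  { apply Classical_Prop.NNPP. intro Hn. destruct (not_closure_open D _ Hn) as [r [Hr Hr']].
    destruct (Req_dec ts 1) as [E1|E1].
    { apply Hn. unfold gam. rewrite E1. replace (vadd p (vscal 1 (vsub x p))) with x by vec_ring. auto. }
    pose proof (vnorm_ge0 (vsub x p)).
    set (dr := r / (2 * (vnorm (vsub x p) + 1))).
    assert (Hd: 0 < dr) by (apply Rdiv_lt_0_compat; lra).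
    set (ts' := Rmin 1 (ts + dr)).
    assert (Hts': ts < ts') by (unfold ts'; apply Rmin_glb_lt; lra).
    assert (HEts': E ts').
    { split. split. lra. apply Rmin_l. intros u Hu. destruct (Rlt_dec u ts). apply Hbelow; lra.
      apply Hr'. apply segment_points_close; auto.
      rewrite Rabs_pos_eq by lra. assert (ts' <= ts + dr) by apply Rmin_r. unfold dr in *. lra. }
    specialize (Hub ts' HEts'). lra. }
  assert (Htspos: 0 < ts).
  { destruct Hts0 as [|E0]; auto. exfalso. apply Hp. rewrite <- Hgam0, E0. auto. }
  exists ts. auto.
Qed.

(* Hence a segment from outside the closure of D to a point of the closure
   meets the boundary: the first closure point is approached by points of
   the segment outside D. *)
Lemma segment_meets_boundary (D : R3 -> Prop) p x : ~ closure D p -> closure D x ->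
  exists ts, 0 < ts <= 1 /\ boundary D (vadd p (vscal ts (vsub x p))).
Proof.
  intros Hp Hx.
  destruct (segment_first_closure_point D p x Hp Hx) as [ts [Hts [Hcl Hbelow]]].
  exists ts. split; [lra|]. split; auto.
  intros e He. pose proof (vnorm_ge0 (vsub x p)).
  set (de := e / (2 * (vnorm (vsub x p) + 1))).
  assert (Hd: 0 < de) by (apply Rdiv_lt_0_compat; lra).
  set (u := Rmax 0 (ts - de)).
  assert (Hu0: 0 <= u) by apply Rmax_l.
  assert (Hu1: u < ts) by (unfold u; apply Rmax_lub_lt; lra).
  exists (vadd p (vscal u (vsub x p))). split.
  - intro HD. apply (Hbelow u); auto. apply in_closure; auto.
  - unfold ball. apply segment_points_close; auto.
    rewrite Rabs_left1 by lra. assert (ts - de <= u) by apply Rmax_r. unfold de in *. lra.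
Qed.

Lemma phi_ge_on_closure (D : R3 -> Prop) p p' c x :
  ~ closure D p -> (forall z, boundary D z -> c <= phi z p p') -> vnorm (vsub p p') <= c ->
  closure D x -> c <= phi x p p'.
Proof.
  intros Hp Hc Hpp Hx.
  destruct (segment_meets_boundary D p x Hp Hx) as [ts [Hts Hb]].
  specialize (Hc _ Hb).
  pose proof (phi_convex p x p p' ts ltac:(lra)). rewrite phi_at_first_focus in H.
  apply Rnot_lt_le. intros Hlt. nra.
Qed.

Lemma triangle_equality_parallel a b :
  vnorm (vadd a b) = vnorm a + vnorm b -> vscal (vnorm b) a = vscal (vnorm a) b.
Proof.
  intros H.
  assert (Hd: dot a b = vnorm a * vnorm b).
  { assert (vnorm (vadd a b) * vnorm (vadd a b) = (vnorm a + vnorm b) * (vnorm a + vnorm b))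
      by (rewrite H; auto).
    rewrite vnorm_sq, dot_vadd_self in H0. rewrite <- (vnorm_sq a), <- (vnorm_sq b) in H0. lra. }
  assert (Hz: dot (vsub (vscal (vnorm b) a) (vscal (vnorm a) b))
                  (vsub (vscal (vnorm b) a) (vscal (vnorm a) b)) = 0).
  { rewrite !dot_subl, !dot_subr, !dot_scall, !dot_scalr, (dot_comm b a), Hd,
      <- (vnorm_sq a), <- (vnorm_sq b). ring. }
  apply dot_eq0 in Hz. rewrite <- (vsub_add (vscal (vnorm b) a) (vscal (vnorm a) b)), Hz. vec_ring.
Qed.

Lemma on_segment p p' q : vnorm (vsub p q) + vnorm (vsub q p') = vnorm (vsub p p') -> segment p p' q.
Proof.
  intros H. set (a := vsub p q). set (b := vsub q p').
  assert (Hab: vadd a b = vsub p p') by (unfold a, b; vec_ring).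
  rewrite <- Hab in H. fold a b in H. symmetry in H. pose proof (triangle_equality_parallel a b H) as E.
  pose proof (vnorm_ge0 a). pose proof (vnorm_ge0 b).
  destruct (Req_dec (vnorm a + vnorm b) 0) as [Z|Z].
  - assert (vnorm a = 0) by lra. apply vnorm_eq0 in H2. exists 0. split. lra.
    unfold a in *. replace q with (vsub p (vsub p q)) by vec_ring. rewrite H2. vec_ring.
  - set (t := vnorm a / (vnorm a + vnorm b)).
    assert (Ht: 0 <= t <= 1).
    { unfold t. split. unfold Rdiv; apply Rmult_le_pos; [lra| left; apply Rinv_0_lt_compat; lra].
      apply Rmult_le_reg_r with (vnorm a + vnorm b). lra. unfold Rdiv. rewrite Rmult_assoc, Rinv_l by lra. lra. }
    exists t. split; auto.
    assert (E2: vscal (vnorm a + vnorm b) a = vscal (vnorm a) (vsub p p')).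
    { rewrite <- Hab. replace (vscal (vnorm a + vnorm b) a) with (vadd (vscal (vnorm a) a) (vscal (vnorm b) a)) by vec_ring.
      rewrite E. vec_ring. }
    assert (Ha: a = vscal t (vsub p p')).
    { unfold t. replace (vscal (vnorm a / (vnorm a + vnorm b)) (vsub p p'))
        with (vscal (/ (vnorm a + vnorm b)) (vscal (vnorm a) (vsub p p'))) by (unfold Rdiv; vec_ring).
      rewrite <- E2. vec_split; field; lra. }
    replace q with (vsub p a) by (unfold a; vec_ring). rewrite Ha. vec_ring.
Qed.


Lemma neq_of_dist_pos x y : 0 < vnorm (vsub x y) -> x <> y.
Proof. intros H E. subst. replace (vsub y y) with vzero in H by vec_ring. rewrite vnorm_zero in H. lra. Qed.

Lemma shifted_focus_facts p' q s : 0 < s < vnorm (vsub q p') ->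
  let A' := vscal (/ vnorm (vsub q p')) (vsub q p') in
  let p's := vadd p' (vscal s A') in
  vsub q p's = vscal ((vnorm (vsub q p') - s) / vnorm (vsub q p')) (vsub q p') /\
  vnorm (vsub q p's) = vnorm (vsub q p') - s /\ vnorm (vsub p's p') = s /\ vnorm A' = 1.
Proof.
  intros Hs A' p's.
  set (r := vnorm (vsub q p')) in *. assert (Hr: 0 < r) by lra.
  assert (E: vsub q p's = vscal ((r - s) / r) (vsub q p')) by (unfold p's, A'; vec_split; field; lra).
  assert (HA: vnorm A' = 1).
  { unfold A'. rewrite vnorm_scal, Rabs_pos_eq by (left; apply Rinv_0_lt_compat; lra).
    fold r. field; lra. }
  split; auto. split; [| split; auto].
  - rewrite E, vnorm_scal. fold r. rewrite Rabs_pos_eq.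
    + field; lra.
    + unfold Rdiv; apply Rmult_le_pos; [lra| left; apply Rinv_0_lt_compat; lra].
  - unfold p's. replace (vsub (vadd p' (vscal s A')) p') with (vscal s A') by vec_ring.
    rewrite vnorm_scal, HA, Rabs_pos_eq; lra.
Qed.

Lemma ray_below_level a d y y' c T r : phi a y y' < c -> 0 <= T < r ->
  phi (vadd a (vscal r d)) y y' = c -> phi (vadd a (vscal T d)) y y' < c.
Proof.
  intros Ha HT Hr.
  assert (Ht: 0 <= T / r <= 1).
  { split. apply Rdiv_le_0_compat'; lra.
    apply Rmult_le_reg_r with r; [lra|]. unfold Rdiv. rewrite Rmult_assoc, Rinv_l by lra. lra. }
  assert (Ht1: T / r < 1).
  { apply Rmult_lt_reg_r with r; [lra|]. unfold Rdiv. rewrite Rmult_assoc, Rinv_l by lra. lra. }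
  pose proof (phi_convex a (vadd a (vscal r d)) y y' (T / r) Ht) as HC.
  replace (vadd a (vscal (T / r) (vsub (vadd a (vscal r d)) a))) with (vadd a (vscal T d)) in HC
    by (vec_split; field; lra).
  rewrite Hr in HC. nra.
Qed.

Lemma ray_level_unique a d y y' c T r : phi a y y' < c -> 0 < T -> 0 < r ->
  phi (vadd a (vscal T d)) y y' = c -> phi (vadd a (vscal r d)) y y' = c -> T = r.
Proof.
  intros Ha HT Hr HcT Hcr.
  destruct (Rtotal_order T r) as [Hlt|[Heq|Hgt]]; auto; exfalso.
  - pose proof (ray_below_level a d y y' c T r Ha ltac:(lra) Hcr). lra.
  - pose proof (ray_below_level a d y y' c r T Ha ltac:(lra) HcT). lra.
Qed.

Lemma on_ray_of_triangle_eq p' A' s x : 0 < s -> vnorm A' = 1 ->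
  vnorm (vsub x p') = vnorm (vsub x (vadd p' (vscal s A'))) + s ->
  x = vadd p' (vscal (s + vnorm (vsub x (vadd p' (vscal s A')))) A').
Proof.
  intros Hs HA Heq.
  set (m := vadd p' (vscal s A')) in *.
  set (a := vsub x m). set (b := vscal s A').
  assert (Hb: vnorm b = s) by (unfold b; rewrite vnorm_scal, HA, Rabs_pos_eq; lra).
  assert (Hab: vadd a b = vsub x p') by (unfold a, b, m; vec_ring).
  rewrite <- Hab, <- Hb in Heq. pose proof (triangle_equality_parallel a b Heq) as TE.
  rewrite Hb in TE. unfold b in TE.
  assert (Ha: a = vscal (vnorm a) A').
  { assert (H1: vscal (/ s) (vscal s a) = vscal (/ s) (vscal (vnorm a) (vscal s A')))
      by (rewrite TE; auto).
    rewrite vscal_inv in H1 by lra. rewrite H1 at 1. rewrite !vscal_assoc. f_equal. field. lra. }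
  replace x with (vadd m a) by (unfold a; vec_ring). rewrite Ha at 1. fold a. unfold m. vec_ring.
Qed.

(* If x minimizes phi(.; p, p'_s) on the boundary, then every inequality
   in c - s = phi(q; p, p'_s) >= phi(x; p, p'_s) >= phi(x; p, p') - s >= c - s
   is an equality; so x lies on the ray from p' through q, at level c, and
   the level c is met only once on that ray: x = q. *)
Lemma lambda_shifted_focus (D : R3 -> Prop) p p' c s q :
  (forall z, boundary D z -> c <= phi z p p') -> vnorm (vsub p p') < c ->
  boundary D q -> phi q p p' = c -> 0 < s < vnorm (vsub q p') ->
  let A' := vscal (/ vnorm (vsub q p')) (vsub q p') in
  let p's := vadd p' (vscal s A') in
  forall x, Lambda D p p's x <-> x = q.
Proof.
  intros Hc Hpp Hq Hphq Hs A' p's.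
  destruct (shifted_focus_facts p' q s Hs) as (_ & E2 & E3 & E4). fold A' p's in E2, E3, E4.
  set (r := vnorm (vsub q p')) in *. assert (Hr: 0 < r) by lra.
  assert (Hq': phi q p p's = c - s) by (unfold phi in Hphq |- *; fold r in Hphq; rewrite E2; lra).
  assert (Hshift: forall x, phi x p p' - s <= phi x p p's).
  { intros x. unfold phi. pose proof (vnorm_sub_tri x p's p'). lra. }
  intros x. split.
  - intros [Hx Hmin]. specialize (Hmin q Hq). rewrite Hq' in Hmin.
    pose proof (Hc x Hx). pose proof (Hshift x).
    assert (Hphx: phi x p p' = c) by lra.
    assert (Heq: vnorm (vsub x p') = vnorm (vsub x p's) + s).
    { unfold phi in *. pose proof (vnorm_sub_tri x p's p'). lra. }
    pose proof (on_ray_of_triangle_eq p' A' s x ltac:(lra) E4 Heq) as Hray. fold p's in Hray.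
    assert (HqA: q = vadd p' (vscal r A')) by (unfold A'; fold r; vec_split; field; lra).
    assert (HT: s + vnorm (vsub x p's) = r).
    { apply (ray_level_unique p' A' p p' c); [rewrite phi_at_focus; auto | pose proof (vnorm_ge0 (vsub x p's)); lra | lra | |].
      - rewrite <- Hray. auto.
      - rewrite <- HqA. auto. }
    rewrite Hray, HT, HqA. reflexivity.
  - intros ->. split; auto. intros z Hz. rewrite Hq'. pose proof (Hc z Hz). pose proof (Hshift z). lra.
Qed.


Definition grad_phi (a b x : R3) : R3 := vadd (normalize (vsub x a)) (normalize (vsub x b)).
Definition hess_phi (a b x : R3) : R3 -> R3 :=
  fun v => vadd (dnormalize (vsub x a) v) (dnormalize (vsub x b) v).

Lemma phi_sym x a b : phi x a b = vnorm (vsub x a) + vnorm (vsub x b).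
Proof. unfold phi. rewrite vnorm_sub_sym. reflexivity. Qed.

Lemma phi_grad a b x k : x <> a -> x <> b -> has_grad (fun z => phi z a b - k) x (grad_phi a b x).
Proof.
  intros Ha Hb. apply has_grad_const. eapply has_grad_ext.
  - apply has_grad_add; apply has_grad_norm_sub; auto.
  - intros z. rewrite phi_sym. reflexivity.
Qed.

Lemma grad_phi_deriv a b x : x <> a -> x <> b -> has_deriv (grad_phi a b) x (hess_phi a b x).
Proof.
  intros Ha Hb. unfold grad_phi, hess_phi.
  apply (has_deriv_add (fun z => normalize (vsub z a)) (fun z => normalize (vsub z b)) x
           (fun h => dnormalize (vsub x a) h) (fun h => dnormalize (vsub x b) h)).
  - apply (has_deriv_normalize (fun z => vsub z a) x (fun h => h)).
    apply has_deriv_sub_const. apply vsub_neq0; auto.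
  - apply (has_deriv_normalize (fun z => vsub z b) x (fun h => h)).
    apply has_deriv_sub_const. apply vsub_neq0; auto.
Qed.

Lemma dnormalize_continuous a x v : x <> a -> forall eps, 0 < eps -> exists del, 0 < del /\
  forall y, vnorm (vsub y x) < del -> vnorm (vsub (dnormalize (vsub y a) v) (dnormalize (vsub x a) v)) < eps.
Proof.
  intros Ha eps He. pose proof (vnorm_pos _ (vsub_neq0 x a Ha)) as Hb. set (b := vnorm (vsub x a)) in *.
  pose proof (vnorm_ge0 v).
  set (K := 12 * vnorm v / (b * b)). assert (HK: 0 <= K) by (unfold K; apply Rdiv_le_0_compat'; nra).
  exists (Rmin (b/2) (eps / (K + 1))). split. apply Rmin_pos. lra. apply Rdiv_lt_0_compat; lra.
  intros y Hy. destruct (Rmin_Rgt_l _ _ _ Hy) as [Hy1 Hy2].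
  pose proof (dnormalize_lipschitz (vsub x a) (vsub y x) v (vsub_neq0 x a Ha) ltac:(fold b; lra)) as HL.
  replace (vadd (vsub x a) (vsub y x)) with (vsub y a) in HL by vec_ring. fold b in HL.
  eapply Rle_lt_trans. exact HL.
  replace (12 * vnorm (vsub y x) * vnorm v / (b * b)) with (K * vnorm (vsub y x)) by (unfold K; field; lra).
  pose proof (vnorm_ge0 (vsub y x)).
  apply Rle_lt_trans with ((K + 1) * vnorm (vsub y x)). nra.
  apply Rmult_lt_reg_r with (/ (K+1)). apply Rinv_0_lt_compat; lra.
  replace ((K + 1) * vnorm (vsub y x) * / (K + 1)) with (vnorm (vsub y x)) by (field; lra).
  exact Hy2.
Qed.

Lemma hess_phi_continuous a b (V : R3 -> Prop) : (forall x, V x -> x <> a /\ x <> b) ->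
  forall v, cont_on V (fun x => hess_phi a b x v).
Proof.
  intros HV v x Hx eps He. destruct (HV x Hx) as [Ha Hb].
  destruct (dnormalize_continuous a x v Ha (eps/2) ltac:(lra)) as [d1 [Hd1 H1]].
  destruct (dnormalize_continuous b x v Hb (eps/2) ltac:(lra)) as [d2 [Hd2 H2]].
  exists (Rmin d1 d2). split. apply Rmin_pos; auto. intros y Hy Hyx.
  destruct (Rmin_Rgt_l _ _ _ Hyx) as [Hy1 Hy2].
  specialize (H1 y Hy1). specialize (H2 y Hy2).
  unfold hess_phi.
  replace (vsub (vadd (dnormalize (vsub y a) v) (dnormalize (vsub y b) v))
                (vadd (dnormalize (vsub x a) v) (dnormalize (vsub x b) v)))
    with (vadd (vsub (dnormalize (vsub y a) v) (dnormalize (vsub x a) v))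
               (vsub (dnormalize (vsub y b) v) (dnormalize (vsub x b) v))) by vec_ring.
  eapply Rle_lt_trans. apply vnorm_triangle. lra.
Qed.

Lemma grad_phi_close a b q x : q <> a -> q <> b ->
  vnorm (vsub x q) <= vnorm (vsub q a) / 2 -> vnorm (vsub x q) <= vnorm (vsub q b) / 2 ->
  vnorm (vsub (grad_phi a b x) (grad_phi a b q))
    <= 4 * vnorm (vsub x q) / vnorm (vsub q a) + 4 * vnorm (vsub x q) / vnorm (vsub q b).
Proof.
  intros Ha Hb Hd1 Hd2.
  pose proof (normalize_lipschitz _ _ (vsub_neq0 q a Ha) Hd1) as L1.
  pose proof (normalize_lipschitz _ _ (vsub_neq0 q b Hb) Hd2) as L2.
  replace (vadd (vsub q a) (vsub x q)) with (vsub x a) in L1 by vec_ring.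
  replace (vadd (vsub q b) (vsub x q)) with (vsub x b) in L2 by vec_ring.
  unfold grad_phi.
  replace (vsub (vadd (normalize (vsub x a)) (normalize (vsub x b)))
                (vadd (normalize (vsub q a)) (normalize (vsub q b))))
    with (vadd (vsub (normalize (vsub x a)) (normalize (vsub q a)))
               (vsub (normalize (vsub x b)) (normalize (vsub q b)))) by vec_ring.
  eapply Rle_trans. apply vnorm_triangle. lra.
Qed.

Lemma ellipsoid_local_level a b c q : phi q a b = c -> q <> a -> q <> b -> grad_phi a b q <> vzero ->
  exists rho, local_level (ellipsoid c a b) q rho (fun x => phi x a b - c) (grad_phi a b).
Proof.
  intros Hq Ha Hb Hw.
  pose proof (vnorm_pos _ (vsub_neq0 q a Ha)) as Hra. pose proof (vnorm_pos _ (vsub_neq0 q b Hb)) as Hrb.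
  pose proof (vnorm_pos _ Hw) as Hwp.
  set (ra := vnorm (vsub q a)) in *. set (rb := vnorm (vsub q b)) in *. set (w := vnorm (grad_phi a b q)) in *.
  assert (Hk: 0 < 8 / ra + 8 / rb)
    by (assert (0 < 8/ra) by (apply Rdiv_lt_0_compat; lra); assert (0 < 8/rb) by (apply Rdiv_lt_0_compat; lra); lra).
  set (rho := Rmin (ra / 2) (Rmin (rb / 2) (w / (8 / ra + 8 / rb)))).
  assert (Hrho: 0 < rho) by (repeat apply Rmin_pos; try apply Rdiv_lt_0_compat; lra).
  assert (Bx: forall x, ball q rho x -> vnorm (vsub x q) < ra / 2 /\ vnorm (vsub x q) < rb / 2 /\
                                      vnorm (vsub x q) < w / (8 / ra + 8 / rb)).
  { intros x Hx. unfold ball, rho in Hx.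
    destruct (Rmin_Rgt_l _ _ _ Hx) as [H1 H']. destruct (Rmin_Rgt_l _ _ _ H') as [H2 H3]. auto. }
  assert (Hne: forall x, ball q rho x -> x <> a /\ x <> b).
  { intros x Hx. destruct (Bx x Hx) as [H1 [H2 _]]. split; apply neq_of_dist_pos.
    - pose proof (vnorm_sub_tri q x a). rewrite vnorm_sub_sym in H1. fold ra in H. lra.
    - pose proof (vnorm_sub_tri q x b). rewrite vnorm_sub_sym in H2. fold rb in H. lra. }
  exists rho. split; auto. split; [split|split].
  - intros x Hx. destruct (Hne x Hx). apply phi_grad; auto.
  - exists (hess_phi a b). split.
    + intros x Hx. destruct (Hne x Hx). apply grad_phi_deriv; auto.
    + apply hess_phi_continuous. auto.
  - intros x Hx E. destruct (Bx x Hx) as [H1 [H2 H3]].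
    pose proof (grad_phi_close a b q x Ha Hb ltac:(fold ra; lra) ltac:(fold rb; lra)) as Hc.
    fold ra rb in Hc. rewrite E in Hc.
    replace (vsub vzero (grad_phi a b q)) with (vscal (-1) (grad_phi a b q)) in Hc by vec_ring.
    rewrite vnorm_opp in Hc. fold w in Hc.
    assert (vnorm (vsub x q) * (8 / ra + 8 / rb) < w).
    { apply Rmult_lt_reg_r with (/ (8 / ra + 8 / rb)). apply Rinv_0_lt_compat; lra.
      replace (vnorm (vsub x q) * (8 / ra + 8 / rb) * / (8 / ra + 8 / rb)) with (vnorm (vsub x q))
        by (field; lra).
      exact H3. }
    assert (4 * vnorm (vsub x q) / ra + 4 * vnorm (vsub x q) / rb = vnorm (vsub x q) * (8 / ra + 8 / rb) / 2)
      by (field; lra).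
    pose proof (vnorm_ge0 (vsub x q)). nra.
  - intros x Hx. unfold ellipsoid. lra.
Qed.

(* Height coefficient of an ellipsoid with inward normal (sg = -1). *)
Lemma height_coef_phi a b q v : height_coef (grad_phi a b) (hess_phi a b q) q (-1) v =
  (dot (dnormalize (vsub q a) v) v + dot (dnormalize (vsub q b) v) v) / (2 * vnorm (grad_phi a b q)).
Proof. unfold height_coef, hess_phi. rewrite dot_addl. unfold Rdiv. ring. Qed.

Lemma dnormalize_quadratic y v : y <> vzero ->
  dot (dnormalize y v) v = (dot v v - dot (normalize y) v * dot (normalize y) v) / vnorm y.
Proof.
  intros H. pose proof (vnorm_pos y H). rewrite dnormalize_proj by auto.
  rewrite dot_scall, dot_subl, dot_scall. unfold Rdiv. ring.
Qed.

Lemma normalize_scale l y : 0 < l -> normalize (vscal l y) = normalize y.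
Proof.
  intros Hl. unfold normalize. rewrite vnorm_scal, Rabs_pos_eq by lra.
  destruct (Req_dec (vnorm y) 0) as [E|E].
  - rewrite E, Rmult_0_r, Rinv_0. vec_ring.
  - vec_split; field; lra.
Qed.

Lemma dnormalize_scale l y v : 0 < l -> y <> vzero -> dnormalize (vscal l y) v = vscal (/ l) (dnormalize y v).
Proof.
  intros Hl Hy. pose proof (vnorm_pos y Hy).
  assert (vscal l y <> vzero). { intro E. apply Hy. rewrite <- (vscal_inv l y) by lra. rewrite E. vec_ring. }
  rewrite !dnormalize_proj by auto. rewrite normalize_scale by auto.
  rewrite vnorm_scal, Rabs_pos_eq by lra.
  rewrite vscal_assoc. f_equal. field. lra.
Qed.


Lemma normalize_mul y : y <> vzero -> vscal (vnorm y) (normalize y) = y.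
Proof.
  intros H. pose proof (vnorm_pos y H). unfold normalize. rewrite vscal_assoc.
  replace (vnorm y * / vnorm y) with 1 by (field; lra). vec_ring.
Qed.

Lemma grad_phi_zero_segment p p' q : q <> p -> q <> p' -> grad_phi p p' q = vzero -> segment p p' q.
Proof.
  intros H1 H2 HZ. apply on_segment.
  pose proof (vsub_neq0 q p H1) as Y1. pose proof (vsub_neq0 q p' H2) as Y2.
  set (u1 := normalize (vsub q p)). set (u2 := normalize (vsub q p')).
  assert (Hu2: u2 = vscal (-1) u1).
  { unfold grad_phi in HZ. fold u1 u2 in HZ. rewrite <- (vadd_sub_l u1 u2), HZ. clearbody u1 u2. vec_ring. }
  assert (E: vsub p p' = vscal (- (vnorm (vsub q p) + vnorm (vsub q p'))) u1).
  { assert (Q1: vsub q p = vscal (vnorm (vsub q p)) u1) by (symmetry; apply normalize_mul; auto).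
    assert (Q2: vsub q p' = vscal (vnorm (vsub q p')) u2) by (symmetry; apply normalize_mul; auto).
    replace (vsub p p') with (vsub (vsub q p') (vsub q p)) by vec_ring.
    rewrite Q2 at 1. rewrite Q1 at 1. rewrite Hu2. clearbody u1 u2.
    generalize (vnorm (vsub q p)) (vnorm (vsub q p')). intros. vec_ring. }
  rewrite E, vnorm_scal. unfold u1. rewrite normalize_norm by auto.
  rewrite (vnorm_sub_sym p q). pose proof (vnorm_ge0 (vsub q p)). pose proof (vnorm_ge0 (vsub q p')).
  rewrite Rabs_left1 by lra. ring.
Qed.

Lemma tangent_defect_pos u1 u2 v : vnorm u1 = 1 -> vnorm u2 = 1 -> vadd u1 u2 <> vzero -> v <> vzero ->
  dot (vadd u1 u2) v = 0 -> 0 < dot v v - dot u2 v * dot u2 v.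
Proof.
  intros H1 H2 Hw Hv Hwv.
  set (z := vsub v (vscal (dot u2 v) u2)).
  assert (Hq: dot z z = dot v v - dot u2 v * dot u2 v).
  { unfold z. rewrite !dot_subl, !dot_subr, !dot_scall, !dot_scalr, <- (vnorm_sq u2), H2, (dot_comm v u2). ring. }
  rewrite <- Hq. destruct (dot_ge0 z) as [H|H]; auto. exfalso.
  symmetry in H. apply dot_eq0 in H.
  assert (Hv2: v = vscal (dot u2 v) u2).
  { rewrite <- (vsub_add v (vscal (dot u2 v) u2)) at 1. fold z. rewrite H.
    generalize (vscal (dot u2 v) u2). intros. vec_ring. }
  assert (Hd: dot u2 v <> 0). { intro E. apply Hv. rewrite Hv2, E. vec_ring. }
  rewrite Hv2, dot_scalr, dot_addl in Hwv.
  assert (dot u1 u2 + dot u2 u2 = 0). { apply Rmult_integral in Hwv. destruct Hwv; auto. contradiction. }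
  apply Hw. apply dot_eq0. rewrite dot_vadd_self, <- (vnorm_sq u1), <- (vnorm_sq u2), H1, H2.
  rewrite <- (vnorm_sq u2), H2 in H0. lra.
Qed.

Lemma parallel_of_orthogonal g w : g <> vzero -> (forall v, dot g v = 0 -> dot w v = 0) ->
  w = vscal (dot g w / dot g g) g.
Proof.
  intros Hg Hpar. pose proof (vnorm_pos _ Hg).
  assert (Hgg: 0 < dot g g) by (rewrite <- vnorm_sq; nra).
  set (lam := dot g w / dot g g). set (v := vsub w (vscal lam g)).
  assert (Hgv: dot g v = 0) by (unfold v, lam; rewrite dot_subr, dot_scalr; field; lra).
  assert (Hvv: dot v v = 0).
  { pose proof (Hpar v Hgv). unfold v at 1. rewrite dot_subl, dot_scall, Hgv, H0. ring. }
  apply dot_eq0 in Hvv. rewrite <- (vsub_add w (vscal lam g)). fold v. rewrite Hvv. vec_ring.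
Qed.

Lemma descent_eventually F G L q r h : 0 < r -> (forall x, ball q r x -> has_grad F x (G x)) ->
  has_deriv G q L -> F q = 0 -> dot (G q) h < 0 ->
  exists del, 0 < del /\ forall t, 0 < t < del -> F (vadd q (vscal t h)) < 0.
Proof.
  intros Hr Hg HD HF Hh.
  destruct (taylor1 F G L q r Hr Hg HD) as [K [d [HK [Hd HT]]]].
  set (a := - dot (G q) h). set (m := vnorm h). pose proof (vnorm_ge0 h) as Hm. fold m in Hm.
  exists (Rmin (d / (m + 1)) (a / (K * (m * m) + 1))). split.
  { apply Rmin_pos; apply Rdiv_lt_0_compat; unfold a; nra. }
  intros t [Ht0 Ht]. destruct (Rmin_Rgt_l _ _ _ Ht) as [Ht1 Ht2].
  assert (Hth: vnorm (vscal t h) = t * m) by (rewrite vnorm_scal, Rabs_pos_eq; fold m; lra).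
  assert (Hw: vnorm (vscal t h) < d).
  { rewrite Hth. apply Rle_lt_trans with (t * (m + 1)). nra.
    apply Rmult_lt_reg_r with (/ (m + 1)). apply Rinv_0_lt_compat; lra.
    replace (t * (m + 1) * / (m + 1)) with t by (field; lra). exact Ht1. }
  specialize (HT _ Hw). rewrite HF, Hth, dot_scalr in HT. apply abs_bounds in HT.
  assert (HKt: K * t * (m * m) < a).
  { apply Rle_lt_trans with (t * (K * (m * m) + 1) - t). nra.
    assert (t * (K * (m * m) + 1) < a).
    { apply Rmult_lt_reg_r with (/ (K * (m * m) + 1)). apply Rinv_0_lt_compat; nra.
      replace (t * (K * (m * m) + 1) * / (K * (m * m) + 1)) with t by (field; nra). exact Ht2. }
    lra. }
  unfold a in HKt. nra.
Qed.

Lemma boundary_normal_data (D : R3 -> Prop) q n : outward_normal D q n ->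
  exists r0 F0 G0 L0, local_def_fn D q r0 F0 G0 /\ local_level (boundary D) q r0 F0 G0 /\
    normal_data F0 G0 L0 q r0 n 1.
Proof.
  intros [Hqb [r0 [F0 [G0 [Hldf Hn0]]]]].
  pose proof (boundary_local_level D q r0 F0 G0 Hldf) as Hll0.
  destruct (level_normal_data (boundary D) q r0 F0 G0 1 Hll0 Hqb (or_introl eq_refl)) as [L0 Hs0].
  exists r0, F0, G0, L0. split; [auto| split; [auto|]].
  replace n with (vscal (1 / vnorm (G0 q)) (G0 q)); auto.
  rewrite Hn0. f_equal. unfold Rdiv. ring.
Qed.

(* Unit normal of an ellipsoid pointing into it (towards the foci). *)
Definition ellipsoid_normal (a b q : R3) : R3 := vscal (-1 / vnorm (grad_phi a b q)) (grad_phi a b q).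

Lemma ellipsoid_normal_data a b k q : phi q a b = k -> q <> a -> q <> b -> grad_phi a b q <> vzero ->
  exists rho, local_level (ellipsoid k a b) q rho (fun x => phi x a b - k) (grad_phi a b) /\
    normal_data (fun x => phi x a b - k) (grad_phi a b) (hess_phi a b q) q rho (ellipsoid_normal a b q) (-1).
Proof.
  intros Hq Ha Hb Hw.
  destruct (ellipsoid_local_level a b k q Hq Ha Hb Hw) as [rho Hll].
  exists rho. split; auto. pose proof Hll as (Hrho & [Hg _] & _ & _).
  refine (conj Hrho (conj Hg (conj (grad_phi_deriv a b q Ha Hb) (conj _ (conj Hw (conj (or_intror eq_refl) eq_refl)))))).
  simpl. lra.
Qed.

Definition shifted_focus (p' q : R3) (s : R) : R3 :=
  vadd p' (vscal s (vscal (/ vnorm (vsub q p')) (vsub q p'))).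

Section TouchingEllipsoids.

Variables (D : R3 -> Prop) (p p' q : R3) (c s : R).
Hypothesis Hp : ~ closure D p.
Hypothesis Hp' : ~ closure D p'.
Hypothesis Hseg : forall x, segment p p' x -> ~ closure D x.
Hypothesis Hcmin : forall x, boundary D x -> c <= phi x p p'.
Hypothesis Hqb : boundary D q.
Hypothesis Hphq : phi q p p' = c.
Hypothesis Hs : 0 < s < vnorm (vsub q p').

Local Notation ps := (shifted_focus p' q s).

Lemma q_not_focus : q <> p /\ q <> p'.
Proof. destruct Hqb as [Hq _]. split; intro E; [apply Hp | apply Hp']; rewrite <- E; auto. Qed.

(* The focal segment avoids the closure of D, so grad phi(q) <> 0. *)
Lemma grad_phi_q_nonzero : grad_phi p p' q <> vzero.
Proof.
  destruct q_not_focus as [H1 H2]. intro Z.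
  apply (Hseg q (grad_phi_zero_segment p p' q H1 H2 Z)). destruct Hqb; auto.
Qed.

(* E_{c-s}(p, p'_s) passes through q with the same normal as E_c(p, p'):
   q - p'_s is a positive multiple of q - p'. *)
Lemma shifted_ellipsoid_at_q : phi q p ps = c - s /\ q <> ps /\ grad_phi p ps q = grad_phi p p' q /\
  vsub q ps = vscal ((vnorm (vsub q p') - s) / vnorm (vsub q p')) (vsub q p').
Proof.
  destruct (shifted_focus_facts p' q s Hs) as (E1 & E2 & _ & _).
  assert (Hlam: 0 < (vnorm (vsub q p') - s) / vnorm (vsub q p')) by (apply Rdiv_lt_0_compat; lra).
  split; [| split; [| split]]; auto.
  - unfold phi in *. unfold shifted_focus. rewrite E2. lra.
  - apply neq_of_dist_pos. unfold shifted_focus. rewrite E2. lra.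
  - unfold grad_phi. unfold shifted_focus. rewrite E1, normalize_scale by auto. reflexivity.
Qed.

(* Near q, points of D have phi(.; p, p') >= c while F0 < 0 there: so the
   gradients of phi and F0 cannot make an acute angle. *)
Lemma grads_not_acute r0 F0 G0 L0 : local_def_fn D q r0 F0 G0 ->
  normal_data F0 G0 L0 q r0 (vscal (1 / vnorm (G0 q)) (G0 q)) 1 ->
  ~ 0 < dot (grad_phi p p' q) (G0 q).
Proof.
  intros Hldf Hs0 Hpos. destruct q_not_focus as [Hq1 Hq2].
  destruct (ellipsoid_normal_data p p' c q Hphq Hq1 Hq2 grad_phi_q_nonzero) as [rho [_ HsE]].
  pose proof Hs0 as (Hr0 & Hg0 & HD0 & HF0 & Hnz0 & _ & _).
  pose proof HsE as (HrE & HgE & HDE & HFE & _ & _ & _).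
  set (h := vscal (-1) (G0 q)).
  assert (Hg2: 0 < dot (G0 q) (G0 q)) by (rewrite <- vnorm_sq; pose proof (vnorm_pos _ Hnz0); nra).
  destruct (descent_eventually F0 G0 L0 q r0 h Hr0 Hg0 HD0 HF0 ltac:(unfold h; rewrite dot_scalr; lra))
    as [d0 [Hd0 H0]].
  destruct (descent_eventually _ _ _ q rho h HrE HgE HDE HFE ltac:(unfold h; rewrite dot_scalr; lra))
    as [d1 [Hd1 H1]].
  set (t := Rmin (Rmin d0 d1) (r0 / (vnorm h + 1)) / 2). pose proof (vnorm_ge0 h).
  assert (Hm: 0 < Rmin (Rmin d0 d1) (r0 / (vnorm h + 1))) by (repeat apply Rmin_pos; try apply Rdiv_lt_0_compat; lra).
  pose proof (Rmin_l (Rmin d0 d1) (r0 / (vnorm h + 1))). pose proof (Rmin_r (Rmin d0 d1) (r0 / (vnorm h + 1))).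
  pose proof (Rmin_l d0 d1). pose proof (Rmin_r d0 d1).
  assert (Ht: 0 < t) by (unfold t; lra).
  assert (Hball: ball q r0 (vadd q (vscal t h))).
  { unfold ball. rewrite vadd_sub_l, vnorm_scal, Rabs_pos_eq by lra.
    apply Rle_lt_trans with (t * (vnorm h + 1)). rewrite Rmult_plus_distr_l. lra.
    apply Rmult_lt_reg_r with (/ (vnorm h + 1)). apply Rinv_0_lt_compat; lra.
    replace (t * (vnorm h + 1) * / (vnorm h + 1)) with t by (field; lra). unfold t. lra. }
  specialize (H0 t ltac:(unfold t; lra)). specialize (H1 t ltac:(unfold t; lra)). simpl in H1.
  destruct Hldf as (_ & _ & _ & HDf).
  assert (HDx: D (vadd q (vscal t h))) by (apply HDf; auto).
  assert (Hpp: vnorm (vsub p p') <= c) by (rewrite <- Hphq; apply phi_lower).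
  pose proof (phi_ge_on_closure D p p' c _ Hp Hcmin Hpp (in_closure D _ HDx)). lra.
Qed.

Lemma outward_normal_eq n : outward_normal D q n -> n = ellipsoid_normal p p' q.
Proof.
  intros Hn. destruct (boundary_normal_data D q n Hn) as (r0 & F0 & G0 & L0 & Hldf & Hll0 & Hs0).
  destruct q_not_focus as [Hq1 Hq2]. pose proof grad_phi_q_nonzero as Hw.
  destruct (ellipsoid_normal_data p p' c q Hphq Hq1 Hq2 Hw) as [rho [_ HsE]].
  pose proof HsE as (HrE & HgE & HDE & HFE & _ & _ & _).
  pose proof Hs0 as (_ & _ & _ & _ & Hnz0 & _ & Hn0).
  assert (Hn1: vscal (1 / vnorm (G0 q)) (G0 q) = n) by auto.
  rewrite <- Hn1 in Hs0.
  set (g := G0 q) in *. set (w := grad_phi p p' q) in *.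
  (* w is orthogonal to the tangent plane of the boundary, hence w = lam g *)
  assert (Hpar: forall v, dot g v = 0 -> dot w v = 0).
  { intros v Hv. assert (1 * dot w v = 0); [| lra].
    apply (grad_orthogonal_of_side F0 G0 L0 r0 1 _ q v _ (grad_phi p p') (hess_phi p p' q) rho 1
             Hs0 Hv HrE HgE HDE HFE).
    exists r0. split; [destruct Hs0; auto|]. intros x Hx Hf.
    destruct Hll0 as (_ & _ & _ & HM). apply HM in Hf; auto. specialize (Hcmin x Hf). lra. }
  pose proof (parallel_of_orthogonal g w Hnz0 Hpar) as Hwl.
  set (lam := dot g w / dot g g) in Hwl.
  pose proof (vnorm_pos _ Hnz0) as Hgp.
  assert (Hgg: 0 < dot g g) by (rewrite <- vnorm_sq; nra).
  (* lam < 0 since the angle between w and g is not acute and w <> 0 *)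
  assert (Hlam: lam < 0).
  { destruct (Rtotal_order lam 0) as [|[E|Hpos]]; auto; exfalso.
    - apply Hw. fold w. rewrite Hwl, E. apply vscal_0.
    - apply (grads_not_acute r0 F0 G0 L0 Hldf Hs0). fold g w.
      rewrite Hwl, dot_scall. apply Rmult_lt_0_compat; auto. }
  rewrite <- Hn1. unfold ellipsoid_normal. fold w. rewrite Hwl.
  rewrite vnorm_scal, Rabs_left by lra. rewrite vscal_assoc. f_equal. field. lra.
Qed.

Lemma boundary_below_ellipsoid r0 F0 G0 L0 v :
  local_level (boundary D) q r0 F0 G0 -> normal_data F0 G0 L0 q r0 (ellipsoid_normal p p' q) 1 ->
  dot (G0 q) v = 0 ->
  height_coef G0 L0 q 1 v <= height_coef (grad_phi p p') (hess_phi p p' q) q (-1) v.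
Proof.
  intros Hll0 Hs0 Hv. destruct q_not_focus as [Hq1 Hq2].
  destruct (ellipsoid_normal_data p p' c q Hphq Hq1 Hq2 grad_phi_q_nonzero) as [rho [_ HsE]].
  apply (height_coef_le_of_side F0 G0 L0 r0 1 _ _ _ rho (-1) q _ v Hs0 HsE Hv).
  exists r0. split; [destruct Hs0; auto|]. intros x Hx Hf.
  destruct Hll0 as (_ & _ & _ & HM). apply HM in Hf; auto. specialize (Hcmin x Hf). lra.
Qed.

(* Moving the focus p' towards q by s divides its contribution to the
   height coefficient by lam = (|q - p'| - s)/|q - p'| < 1, a strict increase
   in every nonzero tangent direction. *)
Lemma shifted_ellipsoid_more_curved v : v <> vzero -> dot (grad_phi p p' q) v = 0 ->
  height_coef (grad_phi p p') (hess_phi p p' q) q (-1) v <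
  height_coef (grad_phi p ps) (hess_phi p ps q) q (-1) v.
Proof.
  intros Hv0 Hwv. destruct q_not_focus as [Hq1 Hq2].
  destruct shifted_ellipsoid_at_q as (_ & _ & Hww & E1).
  assert (Hyp: vsub q p' <> vzero) by (apply vsub_neq0; auto).
  assert (Hyq: vsub q p <> vzero) by (apply vsub_neq0; auto).
  pose proof (tangent_defect_pos _ _ v (normalize_norm _ Hyq) (normalize_norm _ Hyp) grad_phi_q_nonzero Hv0 Hwv) as HX.
  set (lam := (vnorm (vsub q p') - s) / vnorm (vsub q p')) in E1.
  assert (Hlam: 0 < lam < 1).
  { unfold lam. split. apply Rdiv_lt_0_compat; lra. apply Rmult_lt_reg_r with (vnorm (vsub q p')). lra.
    unfold Rdiv. rewrite Rmult_assoc, Rinv_l by lra. lra. }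
  rewrite !height_coef_phi, Hww, E1, dnormalize_scale, dot_scall by (auto; lra).
  rewrite !(dnormalize_quadratic (vsub q p') v Hyp).
  set (Y := dot (dnormalize (vsub q p) v) v). set (W := vnorm (grad_phi p p' q)).
  pose proof (vnorm_pos _ grad_phi_q_nonzero) as HW. fold W in HW.
  pose proof (vnorm_pos _ Hyp).
  set (X := (dot v v - dot (normalize (vsub q p')) v * dot (normalize (vsub q p')) v) / vnorm (vsub q p')).
  assert (HX': 0 < X) by (unfold X; apply Rdiv_lt_0_compat; lra).
  assert (Hl: 1 < / lam) by (rewrite <- Rinv_1; apply Rinv_lt_contravar; lra).
  unfold Rdiv. apply Rmult_lt_compat_r. apply Rinv_0_lt_compat; lra.
  assert (0 < (/ lam - 1) * X) by (apply Rmult_lt_0_compat; lra). lra.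
Qed.

(* The second part of the proposition: all three surfaces share the
   tangent plane at q and the normal n, and the shrunken ellipsoid is
   strictly more curved than the boundary of D:
   <S1 v, v> = 2 tau_{E_{c-s}} > 2 tau_{E_c} >= 2 tau_D = <S2 v, v>. *)
Lemma touching_ellipsoids n : outward_normal D q n ->
  (forall v, tangent_plane (boundary D) q v <-> tangent_plane (ellipsoid (c - s) p ps) q v) /\
  (forall v, tangent_plane (ellipsoid (c - s) p ps) q v <-> tangent_plane (ellipsoid c p p') q v) /\
  (exists S1, shape_op (ellipsoid (c - s) p ps) q n S1) /\
  (exists S2, shape_op (boundary D) q n S2) /\
  (forall S1 S2, shape_op (ellipsoid (c - s) p ps) q n S1 -> shape_op (boundary D) q n S2 ->
     forall v, tangent_plane (boundary D) q v -> v <> vzero -> 0 < dot (vsub (S1 v) (S2 v)) v).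
Proof.
  intros Hn. pose proof (outward_normal_eq n Hn) as HnE.
  destruct (boundary_normal_data D q n Hn) as (r0 & F0 & G0 & L0 & _ & Hll0 & Hs0).
  destruct q_not_focus as [Hq1 Hq2]. pose proof grad_phi_q_nonzero as Hw.
  destruct shifted_ellipsoid_at_q as (Hphq' & Hqps & Hww & _).
  destruct (ellipsoid_normal_data p p' c q Hphq Hq1 Hq2 Hw) as [rho [HllE HsE]].
  destruct (ellipsoid_normal_data p ps (c - s) q Hphq' Hq1 Hqps ltac:(rewrite Hww; auto)) as [rho' [HllE' HsE']].
  unfold ellipsoid_normal in HsE'. rewrite Hww in HsE'. fold (ellipsoid_normal p p' q) in HsE'.
  rewrite <- HnE in HsE, HsE'.
  pose proof (tangent_plane_iff _ _ _ _ _ _ _ _ Hs0 Hll0) as TPb.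
  pose proof (tangent_plane_iff _ _ _ _ _ _ _ _ HsE HllE) as TPE.
  pose proof (tangent_plane_iff _ _ _ _ _ _ _ _ HsE' HllE') as TPE'.
  split; [| split; [| split; [| split]]].
  - intros v. rewrite TPb, TPE'. tauto.
  - intros v. rewrite TPE, TPE'. tauto.
  - destruct (shape_op_exists _ q rho' _ _ (-1) HllE' Hphq' (or_intror eq_refl)) as [S HS].
    exists S. rewrite HnE. unfold ellipsoid_normal. rewrite <- Hww. exact HS.
  - destruct (shape_op_exists _ q r0 _ _ 1 Hll0 Hqb (or_introl eq_refl)) as [S HS].
    exists S. destruct Hs0 as (_ & _ & _ & _ & _ & _ & Hn0). rewrite Hn0. exact HS.
  - intros S1 S2 HS1 HS2 v Hv Hv0. apply TPb in Hv.
    pose proof (normal_data_tangent _ _ _ _ _ _ _ v Hs0 Hv) as HvD.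
    pose proof (normal_data_tangent _ _ _ _ _ _ _ v HsE Hv) as HvE.
    destruct (shape_op_quadratic _ _ _ _ HS1) as [F1 [G1 [L1 [r1 [sg1 [Hl1 [Hsd1 Hf1]]]]]]].
    destruct (shape_op_quadratic _ _ _ _ HS2) as [F2 [G2 [L2 [r2 [sg2 [Hl2 [Hsd2 Hf2]]]]]]].
    rewrite dot_subl, Hf1, Hf2 by (eapply normal_data_tangent; eauto).
    rewrite (height_coef_unique _ _ _ _ _ _ _ _ _ _ _ _ _ _ Hl1 Hsd1 HllE' HsE' Hv).
    rewrite (height_coef_unique _ _ _ _ _ _ _ _ _ _ _ _ _ _ Hl2 Hsd2 Hll0 Hs0 Hv).
    rewrite HnE in Hs0.
    pose proof (boundary_below_ellipsoid r0 F0 G0 L0 v Hll0 Hs0 HvD).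
    pose proof (shifted_ellipsoid_more_curved v Hv0 HvE). lra.
Qed.

End TouchingEllipsoids.

Theorem proposition5p2
  (D : R3 -> Prop) (p p' : R3) (eta' c s : R) (q : R3)
  (HDne : exists x, D x) (HDbd : is_bounded D) (HDop : is_open D)
  (HDC2 : C2_boundary D)
  (Hp : ~ closure D p) (Hp' : ~ closure D p')
  (Hseg : forall x, segment p p' x -> ~ closure D x)
  (Heta : 0 < eta')
  (HB' : forall x, closed_ball p' eta' x -> ~ closure D x)
  (Hc : (exists x, boundary D x /\ phi x p p' = c) /\
        (forall x, boundary D x -> c <= phi x p p'))
  (Hs : 0 < s < eta')
  (Hq : Lambda D p p' q) :
  let A' := vscal (/ vnorm (vsub q p')) (vsub q p') in
  let p's := vadd p' (vscal s A') in
  (forall x, Lambda D p p's x <-> x = q) /\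
  (s < / 2 * (c - vnorm (vsub p p')) ->
   forall n, outward_normal D q n ->
     (forall v, tangent_plane (boundary D) q v <->
                tangent_plane (ellipsoid (c - s) p p's) q v) /\
     (forall v, tangent_plane (ellipsoid (c - s) p p's) q v <->
                tangent_plane (ellipsoid c p p') q v) /\
     (exists S1, shape_op (ellipsoid (c - s) p p's) q n S1) /\
     (exists S2, shape_op (boundary D) q n S2) /\
     (forall S1 S2, shape_op (ellipsoid (c - s) p p's) q n S1 ->
        shape_op (boundary D) q n S2 ->
        forall v, tangent_plane (boundary D) q v -> v <> vzero ->
          0 < dot (vsub (S1 v) (S2 v)) v)).
Proof.
  intros A' p's.
  destruct Hc as [[x0 [Hx0b Hx0c]] Hcmin].
  destruct Hq as [Hqb Hqmin].
  assert (Hphq: phi q p p' = c) by (specialize (Hqmin x0 Hx0b); specialize (Hcmin q Hqb); lra).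
  (* c > |p - p'|, since otherwise q would lie on the focal segment *)
  assert (Hgap: vnorm (vsub p p') < c).
  { destruct (phi_lower q p p') as [|E]; [lra|]. exfalso.
    apply (Hseg q); [| destruct Hqb; auto]. apply on_segment. unfold phi in E. lra. }
  (* q lies outside the ball B', so s < |q - p'| *)
  assert (Hfar: 0 < s < vnorm (vsub q p')).
  { split; [lra|]. apply Rlt_le_trans with eta'; [lra|].
    apply Rnot_lt_le. intro H. apply (HB' q); [unfold closed_ball; lra | destruct Hqb; auto]. }
  split.
  - exact (lambda_shifted_focus D p p' c s q Hcmin Hgap Hqb Hphq Hfar).
  -
    intros _ n Hn.
    exact (touching_ellipsoids D p p' q c s Hp Hp' Hseg Hcmin Hqb Hphq Hfar n Hn).
Qed.
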